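(* Let $T$ be a reflection factorization of length $\ell\ge 5$ generating $G_5$. If at least two reflections from some reflection conjugacy class $K\in\{R_1,R_1^{-1},R_2,R_2^{-1}\}$ of $G_5$ appear in $T$, then for all $x\in K$ there exists a factorization $T'$, Hurwitz equivalent to $T$, of the form $(r_1,\dots,r_{\ell-1},x)$ such that $r_1,\dots,r_{\ell-1}$ generate $G_5$.
   Context: Let $G_7$ be the subgroup of $GL_2(\mathbb{C})$ generated by $s=\begin{bmatrix}1&0\\0&-1\end{bmatrix}$, $t=\frac14\begin{bmatrix}(1+\sqrt3)+(-1+\sqrt3)i & (1+\sqrt3)+(-1+\sqrt3)i\\ (-1+\sqrt3)-(1+\sqrt3)i & (1-\sqrt3)+(1+\sqrt3)i\end{bmatrix}$ and $u=t^{\top}$ (presentation $\langle s,t,u\mid s^2=t^3=u^3=1,\ stu=ust=tus\rangle$, order $144$). A reflection is a linear map of $\mathbb{C}^2$ whose fixed space has dimension $1$. Let $R_1$, $R_2$ be the $G_7$-conjugacy classes of $t$, $u$ respectively (each four reflections of order $3$), and $R_j^{-1}=\{r^{-1}:r\in R_j\}$. Let $G_5=\langle t,u\rangle$, of order $72$; its reflections are the sixteen elements of $R_1\cup R_1^{-1}\cup R_2\cup R_2^{-1}$ and these four sets are its reflection conjugacy classes. A reflection factorization of length $\ell$ is a tuple $(r_1,\dots,r_\ell)$ of reflections; it generates $\langle r_1,\dots,r_\ell\rangle$. The Hurwitz move $\sigma_i$ sends $(r_1,\dots,r_\ell)$ to $(r_1,\dots,r_{i-1},r_{i+1},r_{i+1}^{-1}r_ir_{i+1},r_{i+2},\dots,r_\ell)$;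 two factorizations are Hurwitz equivalent if one is obtained from the other by a finite sequence of Hurwitz moves. *)

From HB Require Import structures.
From mathcomp Require Import all_boot all_order all_algebra.
From mathcomp Require Import algC.
Set Implicit Arguments. Unset Strict Implicit. Unset Printing Implicit Defensive.
Import Order.TTheory GRing.Theory Num.Theory.
Local Open Scope ring_scope.

(* Complex numbers are modelled by algC (algebraic complex
   numbers), which contain all entries of s, t, u. *)

Notation M := 'M[algC]_2.

Definition mx2 (a b c d : algC) : M :=
  \matrix_(i < 2, j < 2)
    if i == 0 then (if j == 0 then a else b) else (if j == 0 then c else d).

Definition sq3 : algC := sqrtC 3.

Definition s_mx : M := mx2 1 0 0 (-1).

Definition t_mx : M :=
  4^-1 *: mx2 ((1 + sq3) + (-1 + sq3) * 'i) ((1 + sq3) + (-1 + sq3) * 'i)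
              ((-1 + sq3) - (1 + sq3) * 'i) ((1 - sq3) + (1 + sq3) * 'i).

Definition u_mx : M := t_mx^T.

Definition reflection (A : M) : Prop :=
  A \in unitmx /\ \rank (A - 1%:M) = 1%N.

Inductive generated (gens : seq M) : M -> Prop :=
  | gen_one : generated gens 1
  | gen_mul x g : x \in gens -> generated gens g -> generated gens (x * g)
  | gen_mulV x g : x \in gens -> generated gens g -> generated gens (x^-1 * g).

Definition G7 : M -> Prop := generated [:: s_mx; t_mx; u_mx].
Definition G5 : M -> Prop := generated [:: t_mx; u_mx].

Definition generates (gens : seq M) (H : M -> Prop) : Prop :=
  forall A, generated gens A <-> H A.

Definition R1 (x : M) : Prop := exists g, G7 g /\ x = g^-1 * t_mx * g.
Definition R2 (x : M) : Prop := exists g, G7 g /\ x = g^-1 * u_mx * g.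
Definition R1inv (x : M) : Prop := R1 x^-1.
Definition R2inv (x : M) : Prop := R2 x^-1.

Definition refl_fact (T : seq M) : Prop := forall r, r \in T -> reflection r.

(* Hurwitz move sigma_{i+1} (0-indexed i, i + 1 < size T):
   (.., r_i, r_{i+1}, ..) |-> (.., r_{i+1}, r_{i+1}^-1 r_i r_{i+1}, ..) *)
Definition hurwitz_move (i : nat) (T : seq M) : seq M :=
  let a := nth 0 T i in let b := nth 0 T i.+1 in
  take i T ++ [:: b; b^-1 * a * b] ++ drop i.+2 T.

Inductive hurwitz_reach : seq M -> seq M -> Prop :=
  | hr_refl T : hurwitz_reach T T
  | hr_step i T T' : (i.+1 < size T)%N -> hurwitz_reach (hurwitz_move i T) T' ->
                     hurwitz_reach T T'.

Definition hurwitz_equiv (T T' : seq M) : Prop :=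
  hurwitz_reach T T' \/ hurwitz_reach T' T.

(* The groups involved are finite, and every fact used about them is decided by computation
   in an exact model: the elements of G7 are quarters of matrices over Z[sqrt 3, i], listed
   together with certified multiplication data.  Given the factorization, Hurwitz moves bring
   to the front a reflection a of K, then a second reflection b' of K, then a reflection of the
   other family, which must occur since one family alone generates a proper subgroup.  According
   to the classes of the remaining reflections, a block of four or five reflections is turned
   into (ys, x) with a generating pair in ys by one of a few tabulated move sequences, checked
   for all possible blocks.  The reflections after the block are then passed over x: some power
   of the braid move, a permutation of the finite set of pairs, is its inverse. *)

From HB Require Import structures.
From mathcomp Require Import all_boot all_order all_algebra.
From mathcomp Require Import algC.
From mathcomp Require Import ring zify.
Set Implicit Arguments. Unset Strict Implicit. Unset Printing Implicit Defensive.
Import Order.TTheory GRing.Theory Num.Theory.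
Local Open Scope ring_scope.

Lemma generated_mem (gens : seq M) x : x \in gens -> generated gens x.
Proof. by move=> xg; rewrite -[x]mulr1; apply: gen_mul (gen_one _). Qed.

Lemma generated_mul (gens : seq M) A B :
  generated gens A -> generated gens B -> generated gens (A * B).
Proof.
elim=> [|x g xg _ IH|x g xg _ IH] gB; rewrite ?mul1r // -mulrA.
  exact: gen_mul (IH gB).
exact: gen_mulV (IH gB).
Qed.

Section GeneratedByUnits.

Variable gens : seq M.
Hypothesis gens_unit : {in gens, forall x, x \is a GRing.unit}.

Lemma generated_unit A : generated gens A -> A \is a GRing.unit.
Proof.
elim=> [|x g xg _ gU|x g xg _ gU]; first exact: unitr1.
  by rewrite unitrMr //; apply: gens_unit.
by rewrite unitrMr // unitrV; apply: gens_unit.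
Qed.

Lemma generated_inv A : generated gens A -> generated gens A^-1.
Proof.
elim=> [|x g xg gg IH|x g xg gg IH]; first by rewrite invr1; exact: gen_one.
  rewrite (invrM (gens_unit xg) (generated_unit gg)) -[x^-1]mulr1.
  exact: generated_mul IH (gen_mulV xg (gen_one _)).
have xU : x^-1 \is a GRing.unit by rewrite unitrV; apply: gens_unit.
rewrite (invrM xU (generated_unit gg)) invrK.
exact: generated_mul IH (generated_mem xg).
Qed.

Lemma generated_conj A B :
  generated gens A -> generated gens B -> generated gens (B^-1 * A * B).
Proof.
by move=> gA gB; rewrite -mulrA; apply: generated_mul (generated_inv gB) (generated_mul gA gB).
Qed.

Lemma generated_trans (gens' : seq M) A :
  {in gens', forall x, generated gens x} -> generated gens' A -> generated gens A.
Proof.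
move=> gens'_gen; elim=> [|x g xg _ IH|x g xg _ IH]; first exact: gen_one.
  exact: generated_mul (gens'_gen x xg) IH.
exact: generated_mul (generated_inv (gens'_gen x xg)) IH.
Qed.

End GeneratedByUnits.

(* Unlike [ord_enum], whose [insub] is blocked by the opaque [idP], [inZp] reduces under
   [vm_compute]. *)
Definition ords n : seq 'I_n.+1 := [seq inZp i | i <- iota 0 n.+1].

Lemma all_ordsP n (P : pred 'I_n.+1) : all P (ords n) -> forall i, P i.
Proof.
by move/allP=> allP i; apply: allP; rewrite -[i]valZpK map_f // mem_iota ltn_ord.
Qed.

Lemma all_iotaP n (P : pred nat) : all P (iota 0 n) -> forall i, (i < n)%N -> P i.
Proof. by move/allP=> allP i ltin; apply: allP; rewrite mem_iota. Qed.

Section HurwitzMoves.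

Variables (T : Type) (x0 : T) (cj : T -> T -> T).

Definition hmove (i : nat) (s : seq T) : seq T :=
  take i s ++ [:: nth x0 s i.+1; cj (nth x0 s i.+1) (nth x0 s i)] ++ drop i.+2 s.

Inductive hreach : seq T -> seq T -> Prop :=
  | hreach_refl s : hreach s s
  | hreach_step i s s' : (i.+1 < size s)%N -> hreach (hmove i s) s' -> hreach s s'.

Lemma hreach_trans s1 s2 s3 : hreach s1 s2 -> hreach s2 s3 -> hreach s1 s3.
Proof. by elim=> // i s s' lti _ IH /IH; apply: hreach_step. Qed.

Lemma size_hmove i s : (i.+1 < size s)%N -> size (hmove i s) = size s.
Proof. by move=> lti; rewrite /hmove !size_cat size_take size_drop ltnW //=; lia. Qed.

Lemma hmove_catl l i s : hmove (size l + i) (l ++ s) = l ++ hmove i s.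
Proof.
have past k : (size l + k.+1 <= size l)%N = false by lia.
by rewrite /hmove take_cat drop_cat !nth_cat -!addnS !past !addKn -catA.
Qed.

Lemma hmove_catr i s r : (i.+1 < size s)%N -> hmove i (s ++ r) = hmove i s ++ r.
Proof.
move=> lti; rewrite /hmove take_cat drop_cat !nth_cat lti (ltnW lti) -!catA.
case: ltnP => // le_s; have -> : (i.+2 - size s = 0)%N by lia.
by rewrite drop0 drop_oversize.
Qed.

Lemma hreach_catl l s s' : hreach s s' -> hreach (l ++ s) (l ++ s').
Proof.
elim=> [s0|i s1 s2 lti _ IH]; first exact: hreach_refl.
by apply: (@hreach_step (size l + i)); rewrite ?hmove_catl // size_cat -addnS ltn_add2l.
Qed.

Lemma hreach_catr s s' r : hreach s s' -> hreach (s ++ r) (s' ++ r).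
Proof.
elim=> [s0|i s1 s2 lti _ IH]; first exact: hreach_refl.
apply: (@hreach_step i); rewrite ?hmove_catr // size_cat.
exact: leq_trans lti (leq_addr _ _).
Qed.

Lemma hreach_swap l p q r : hreach (l ++ p :: q :: r) (l ++ q :: cj q p :: r).
Proof.
apply: hreach_catl; apply: (@hreach_step 0) => //.
by rewrite /hmove /= drop0; apply: hreach_refl.
Qed.

Lemma hreach_to_front l y r : hreach (l ++ y :: r) (y :: map (cj y) l ++ r).
Proof.
elim/last_ind: l r => [|l w IH] r; first exact: hreach_refl.
rewrite cat_rcons map_rcons cat_rcons.
exact: hreach_trans (hreach_swap l w y r) (IH _).
Qed.

End HurwitzMoves.

Section HurwitzFinite.

Variables (T : finType) (x0 : T) (cj : T -> T -> T).
Hypothesis cj_inj : forall b, injective (cj b).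

Definition braid (pq : T * T) : T * T := (pq.2, cj pq.2 pq.1).

Lemma braid_inj : injective braid.
Proof. by move=> [p q] [p' q'] [<-] /cj_inj->. Qed.

Lemma hreach_iter_braid l p q r k :
  hreach x0 cj (l ++ p :: q :: r)
    (l ++ (iter k braid (p, q)).1 :: (iter k braid (p, q)).2 :: r).
Proof.
elim: k => [|k IH]; first exact: hreach_refl.
by apply: hreach_trans IH _; rewrite iterS; apply: hreach_swap.
Qed.

(* Since braid permutes the finite set of pairs, some power of it is braid^-1. *)
Lemma hreach_pass l x y r : exists y', hreach x0 cj (l ++ x :: y :: r) (l ++ y' :: x :: r).
Proof.
have := iter_order braid_inj (x, y).
rewrite -(prednK (order_gt0 braid (x, y))) iterS; set pq := iter _ braid _.
by move=> /(congr1 fst) /= pq2; exists pq.1; rewrite -{2}pq2; apply: hreach_iter_braid.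
Qed.

Lemma hreach_to_back l x r : exists r', hreach x0 cj (l ++ x :: r) (l ++ r' ++ [:: x]).
Proof.
elim: r l => [|y r IH] l; first by exists [::]; apply: hreach_refl.
have [y' pass] := hreach_pass l x y r; have [r' back] := IH (rcons l y').
by exists (y' :: r'); apply: hreach_trans pass _; move: back; rewrite !cat_rcons.
Qed.

End HurwitzFinite.

Section HurwitzMatrices.

Variables (T : Type) (x0 : T) (cj : T -> T -> T) (f : T -> M).
Hypothesis f_cj : forall a b, f (cj b a) = (f b)^-1 * f a * f b.

Lemma hurwitz_move_map i s :
  (i.+1 < size s)%N -> hurwitz_move i (map f s) = map f (hmove x0 cj i s).
Proof.
move=> lti; rewrite /hurwitz_move /hmove !map_cat map_take map_drop /=.
by rewrite !(nth_map x0) ?f_cj // ltnW.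
Qed.

Lemma hurwitz_reach_map s s' : hreach x0 cj s s' -> hurwitz_reach (map f s) (map f s').
Proof.
elim=> [s0|i s1 s2 lti _ IH]; first exact: hr_refl.
by apply: (@hr_step i); rewrite ?size_map ?hurwitz_move_map.
Qed.

End HurwitzMatrices.

Lemma hurwitz_reach_closed (P : M -> Prop) s s' :
    (forall a b, P a -> P b -> P (b^-1 * a * b)) ->
  hurwitz_reach s s' -> {in s, forall a, P a} -> {in s', forall a, P a}.
Proof.
move=> P_conj; elim=> // i s1 s2 lti _ IH Ps1; apply: IH => x.
have Pnth j : (j < size s1)%N -> P (nth 0 s1 j) by move=> ltj; apply/Ps1/mem_nth.
rewrite /hurwitz_move !mem_cat !inE ?orbF -!orbA.
case/or4P=> [/mem_take/Ps1 //|/eqP->|/eqP->|/mem_drop/Ps1 //]; first exact: Pnth.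
by apply: P_conj; apply: Pnth; rewrite // ltnW.
Qed.

(* [(a, b, c, d)] stands for [a + b sqrt 3 + c i + d i sqrt 3]. *)
Definition quad := (int * int * int * int)%type.

Definition quad0 : quad := (0, 0, 0, 0)%Z.

Definition quadC (x : quad) : algC :=
  let: (a, b, c, d) := x in a%:~R + b%:~R * sq3 + c%:~R * 'i + d%:~R * ('i * sq3).

Definition quad_add (x y : quad) : quad :=
  let: (a, b, c, d) := x in let: (a', b', c', d') := y in
  (a + a', b + b', c + c', d + d').

Definition quad_scale (k : int) (x : quad) : quad :=
  let: (a, b, c, d) := x in (k * a, k * b, k * c, k * d).

Definition quad_sub (x y : quad) : quad :=
  let: (a, b, c, d) := x in let: (a', b', c', d') := y in
  (a - a', b - b', c - c', d - d').

Definition quad_mul (x y : quad) : quad :=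
  let: (a, b, c, d) := x in let: (a', b', c', d') := y in
  (a * a' + 3 * (b * b') - c * c' - 3 * (d * d'),
   a * b' + b * a' - c * d' - d * c',
   a * c' + c * a' + 3 * (b * d') + 3 * (d * b'),
   a * d' + d * a' + b * c' + c * b').

Lemma sq3_sq : sq3 * sq3 = 3.
Proof. by rewrite -expr2 sqrtCK. Qed.

Lemma quadC_add x y : quadC (quad_add x y) = quadC x + quadC y.
Proof.
case: x => [[[a b] c] d]; case: y => [[[a' b'] c'] d'] /=.
rewrite !intrD; ring.
Qed.

Lemma quadC_scale k x : quadC (quad_scale k x) = k%:~R * quadC x.
Proof. case: x => [[[a b] c] d] /=; rewrite !intrM; ring. Qed.

Lemma quadC_sub x y : quadC (quad_sub x y) = quadC x - quadC y.
Proof.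
case: x => [[[a b] c] d]; case: y => [[[a' b'] c'] d'] /=.
rewrite !intrB; ring.
Qed.

Lemma quadC_mul x y : quadC (quad_mul x y) = quadC x * quadC y.
Proof.
case: x => [[[a b] c] d]; case: y => [[[a' b'] c'] d'] /=.
rewrite !(intrD, intrN, intrM).
have Hi : 'i * 'i = -1 :> algC := mulCii _.
apply/eqP; rewrite -subr_eq0; apply/eqP.
transitivity ((3 - sq3 * sq3) * (b%:~R * b'%:~R + (b%:~R * d'%:~R + d%:~R * b'%:~R) * 'i
     + d%:~R * d'%:~R * ('i * 'i))
   - ('i * 'i + 1) * (c%:~R * c'%:~R + (c%:~R * d'%:~R + d%:~R * c'%:~R) * sq3
     + 3 * d%:~R * d'%:~R)); first by ring.
by rewrite sq3_sq Hi; ring.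
Qed.

Lemma sqr_eq_three_sqr (m n : int) : m * m = 3 * (n * n) -> n = 0.
Proof.
move=> /(congr1 absz); rewrite !abszM => E; apply/eqP; rewrite -absz_eq0.
apply/negPn/negP => n0.
have m0 : (0 < `|m|)%N by nia.
have := congr1 (logn 3) E; rewrite !mulnn lognM ?expn_gt0 ?lt0n ?n0 //.
by rewrite !lognX (@logn_prime 3 3) //= => /(congr1 odd); rewrite oddD !oddM.
Qed.

(* [x] divides its norm [al^2 - 3 be^2], which vanishes only when [be = 0] (sqrt 3 being
   irrational) and then [al], a sum of squares, vanishes too. *)
Lemma quadC_eq0 x : quadC x = 0 -> x = quad0.
Proof.
case: x => [[[a b] c] d] /= x0.
pose al := a * a + 3 * (b * b) + c * c + 3 * (d * d).
pose be := 2 * (a * b + c * d).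
have Hi : 'i * 'i = -1 :> algC := mulCii _.
have norm0 : (al * al - 3 * (be * be))%:~R = 0 :> algC.
  transitivity ((a%:~R + b%:~R * sq3 + c%:~R * 'i + d%:~R * ('i * sq3))
                * (a%:~R + b%:~R * sq3 - c%:~R * 'i - d%:~R * ('i * sq3))
                * (al%:~R - be%:~R * sq3)); last by rewrite x0 !mul0r.
  pose Q := c%:~R + d%:~R * sq3 : algC.
  transitivity (al%:~R * al%:~R - 3 * (be%:~R * be%:~R) - be%:~R * be%:~R * (sq3 * sq3 - 3)
    + ((b%:~R * b%:~R + d%:~R * d%:~R) * (sq3 * sq3 - 3) - Q * Q * ('i * 'i + 1))
      * (al%:~R - be%:~R * sq3)); first by rewrite sq3_sq Hi; rewrite intrB !intrM; ring.
  rewrite /al /be /Q !(intrD, intrM); ring.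
have be0 : be = 0.
  by apply: (@sqr_eq_three_sqr al); apply/eqP; rewrite -subr_eq0 -(intr_eq0 algC) norm0 eqxx.
have al0 : al = 0.
  by apply/eqP; move/eqP: norm0; rewrite be0 mulr0 subr0 intr_eq0 mulf_eq0 orbb.
move: al0; rewrite /al /quad0; clear=> al0.
by congr (_, _, _, _); nia.
Qed.

Lemma quadC_inj : injective quadC.
Proof.
move=> [[[a b] c] d] [[[a' b'] c'] d'] /eqP; rewrite -subr_eq0 -quadC_sub => /eqP.
move/quadC_eq0; case=> /eqP + /eqP + /eqP + /eqP.
by rewrite !subr_eq0 => /eqP-> /eqP-> /eqP-> /eqP->.
Qed.

Definition qmx := (quad * quad * quad * quad)%type.

Definition qmxC (A : qmx) : M :=
  let: (a, b, c, d) := A in mx2 (quadC a) (quadC b) (quadC c) (quadC d).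

Definition qmx_mul (A B : qmx) : qmx :=
  let: (a, b, c, d) := A in let: (a', b', c', d') := B in
  (quad_add (quad_mul a a') (quad_mul b c'), quad_add (quad_mul a b') (quad_mul b d'),
   quad_add (quad_mul c a') (quad_mul d c'), quad_add (quad_mul c b') (quad_mul d d')).

Definition qmx_scale (k : int) (A : qmx) : qmx :=
  let: (a, b, c, d) := A in (quad_scale k a, quad_scale k b, quad_scale k c, quad_scale k d).

Definition qmx_det (A : qmx) : quad :=
  let: (a, b, c, d) := A in quad_sub (quad_mul a d) (quad_mul b c).

Lemma mx2_mul a b c d a' b' c' d' :
  mx2 a b c d * mx2 a' b' c' d' =
  mx2 (a * a' + b * c') (a * b' + b * d') (c * a' + d * c') (c * b' + d * d').
Proof.
apply/matrixP => i j; rewrite !mxE !big_ord_recl big_ord0 !mxE /=.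
by case: i => [[|[|//]] ?]; case: j => [[|[|//]] ?]; rewrite /= addr0.
Qed.

Lemma mx2_scale k a b c d : k *: mx2 a b c d = mx2 (k * a) (k * b) (k * c) (k * d).
Proof.
by apply/matrixP => i j; rewrite !mxE; case: i => [[|[|//]] ?]; case: j => [[|[|//]] ?].
Qed.

Lemma mx2_inj a b c d a' b' c' d' :
  mx2 a b c d = mx2 a' b' c' d' -> [/\ a = a', b = b', c = c' & d = d'].
Proof.
move=> E; have e i j := congr1 (fun A : M => A i j) E.
by move: (e 0 0) (e 0 1) (e 1 0) (e 1 1); rewrite !mxE /= => -> -> -> ->.
Qed.

Lemma mx2_unit a b c d : a * d - b * c != 0 -> mx2 a b c d \in unitmx.
Proof.
move=> det_neq0; rewrite unitmxE unitfE; apply: contraNneq det_neq0 => <-.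
rewrite (expand_det_row _ 0) !big_ord_recl big_ord0 /cofactor !det_mx11 !mxE /=.
by rewrite expr0 expr1 addr0 mul1r mulN1r mulrN.
Qed.

Lemma qmxC_mul A B : qmxC (qmx_mul A B) = qmxC A * qmxC B.
Proof.
case: A => [[[a b] c] d]; case: B => [[[a' b'] c'] d'] /=.
by rewrite mx2_mul !quadC_add !quadC_mul.
Qed.

Lemma qmxC_scale k A : qmxC (qmx_scale k A) = k%:~R *: qmxC A.
Proof. by case: A => [[[a b] c] d] /=; rewrite mx2_scale !quadC_scale. Qed.

Lemma qmxC_inj : injective qmxC.
Proof.
move=> [[[a b] c] d] [[[a' b'] c'] d'] /mx2_inj[].
by move=> /quadC_inj-> /quadC_inj-> /quadC_inj-> /quadC_inj->.
Qed.

(* Every element of G7 is a quarter of a matrix with entries in Z[sqrt 3, i]. *)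
Definition qmx4C (A : qmx) : M := 4^-1 *: qmxC A.

Lemma four_neq0 : (4 : algC) != 0.
Proof. by rewrite pnatr_eq0. Qed.

Lemma qmx4C_mul A B C : qmx_mul A B = qmx_scale 4 C -> qmx4C A * qmx4C B = qmx4C C.
Proof.
move=> AB; rewrite /qmx4C -scalerAl -scalerAr scalerA -qmxC_mul AB qmxC_scale scalerA.
congr (_ *: _); change ((4 : int)%:~R) with (4 : algC).
by rewrite -mulrA (mulVf four_neq0) mulr1.
Qed.

Lemma qmx4C_inj : injective qmx4C.
Proof.
move=> A B /(congr1 (fun X => 4 *: X)); rewrite !scalerA (mulfV four_neq0) !scale1r.
exact: qmxC_inj.
Qed.

Definition quad4 : quad := (4, 0, 0, 0)%Z.

Lemma quadC4 : quadC quad4 = 4.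
Proof. by rewrite /= !mul0r !addr0. Qed.

Definition qmx_shift4 (A : qmx) : qmx :=
  let: (a, b, c, d) := A in (quad_sub a quad4, b, c, quad_sub d quad4).

Lemma qmx4C_shift4 A : qmx4C (qmx_shift4 A) = qmx4C A - 1.
Proof.
case: A => [[[a b] c] d]; apply/matrixP => i j; rewrite /qmx4C /= !mxE !quadC_sub quadC4.
case: i => [[|[|//]] ?]; case: j => [[|[|//]] ?] /=; rewrite ?subr0 //.
all: by rewrite mulrBr (mulVf four_neq0).
Qed.

Lemma qmx4C_unit A : qmx_det A != quad0 -> qmx4C A \in unitmx.
Proof.
case: A => [[[a b] c] d] /= det_neq0; rewrite /qmx4C /= mx2_scale; apply: mx2_unit.
have -> : 4^-1 * quadC a * (4^-1 * quadC d) - 4^-1 * quadC b * (4^-1 * quadC c)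
          = 16^-1 * quadC (quad_sub (quad_mul a d) (quad_mul b c)).
  by rewrite quadC_sub !quadC_mul; field.
apply: mulf_neq0; first by rewrite invr_eq0 pnatr_eq0.
by apply: contra det_neq0 => /eqP/quadC_eq0->.
Qed.

Lemma qmx4C_not_reflection A : qmx_det (qmx_shift4 A) != quad0 -> ~ reflection (qmx4C A).
Proof. by move=> /qmx4C_unit; rewrite qmx4C_shift4 => /mxrank_unit rk [_]; rewrite rk. Qed.

(* The 144 elements of G7, scaled by 4; the first four are 1, t, u and s. *)
Definition g7_mx : seq qmx := [:: ((4,0,0,0),(0,0,0,0),(0,0,0,0),(4,0,0,0));
  ((1,1,-1,1),(1,1,-1,1),(-1,1,-1,-1),(1,-1,1,1));
  ((1,1,-1,1),(-1,1,-1,-1),(1,1,-1,1),(1,-1,1,1)); ((4,0,0,0),(0,0,0,0),(0,0,0,0),(-4,0,0,0));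
  ((1,1,1,-1),(-1,1,1,1),(1,1,1,-1),(1,-1,-1,-1)); ((0,0,0,0),(0,2,2,0),(0,2,2,0),(0,0,0,0));
  ((1,1,-1,1),(1,1,-1,1),(1,-1,1,1),(-1,1,-1,-1)); ((0,2,2,0),(0,0,0,0),(0,0,0,0),(0,-2,-2,0));
  ((1,1,1,-1),(1,1,1,-1),(-1,1,1,1),(1,-1,-1,-1));
  ((1,1,-1,1),(-1,1,-1,-1),(-1,-1,1,-1),(-1,1,-1,-1));
  ((1,1,-1,1),(-1,-1,1,-1),(-1,1,-1,-1),(-1,1,-1,-1));
  ((1,1,-1,1),(1,-1,1,1),(1,1,-1,1),(-1,1,-1,-1)); ((2,0,-2,0),(-2,0,2,0),(2,0,2,0),(2,0,2,0));
  ((1,1,1,-1),(-1,1,1,1),(-1,-1,-1,1),(-1,1,1,1)); ((2,0,2,0),(2,0,2,0),(-2,0,2,0),(2,0,-2,0));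
  ((2,0,-2,0),(2,0,2,0),(-2,0,2,0),(2,0,2,0)); ((0,0,0,0),(0,2,2,0),(0,-2,-2,0),(0,0,0,0));
  ((-1,1,1,1),(1,1,1,-1),(1,-1,-1,-1),(1,1,1,-1)); ((0,2,2,0),(0,0,0,0),(0,0,0,0),(0,2,2,0));
  ((2,0,2,0),(-2,0,-2,0),(2,0,-2,0),(2,0,-2,0)); ((2,0,2,0),(-2,0,2,0),(2,0,2,0),(2,0,-2,0));
  ((2,0,2,0),(2,0,-2,0),(-2,0,-2,0),(2,0,-2,0));
  ((1,1,1,-1),(1,1,1,-1),(1,-1,-1,-1),(-1,1,1,1)); ((0,0,0,0),(2,0,0,-2),(2,0,0,-2),(0,0,0,0));
  ((-1,1,1,1),(1,-1,-1,-1),(1,1,1,-1),(1,1,1,-1));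
  ((1,1,1,-1),(1,-1,-1,-1),(1,1,1,-1),(-1,1,1,1)); ((0,0,0,0),(0,-2,-2,0),(0,2,2,0),(0,0,0,0));
  ((1,1,-1,1),(-1,-1,1,-1),(1,-1,1,1),(1,-1,1,1));
  ((1,1,1,-1),(-1,-1,-1,1),(-1,1,1,1),(-1,1,1,1));
  ((1,1,-1,1),(1,-1,1,1),(-1,-1,1,-1),(1,-1,1,1)); ((0,2,-2,0),(0,0,0,0),(0,0,0,0),(0,-2,2,0));
  ((2,0,-2,0),(-2,0,2,0),(-2,0,-2,0),(-2,0,-2,0)); ((0,0,0,0),(0,0,4,0),(0,0,-4,0),(0,0,0,0));
  ((2,0,2,0),(2,0,2,0),(2,0,-2,0),(-2,0,2,0)); ((1,-1,1,1),(1,1,-1,1),(-1,1,-1,-1),(1,1,-1,1));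
  ((2,0,0,2),(0,0,0,0),(0,0,0,0),(2,0,0,2)); ((0,0,0,0),(2,0,0,2),(-2,0,0,-2),(0,0,0,0));
  ((2,0,-2,0),(2,0,2,0),(2,0,-2,0),(-2,0,-2,0)); ((-2,0,-2,0),(2,0,2,0),(2,0,-2,0),(2,0,-2,0));
  ((-2,0,2,0),(2,0,2,0),(2,0,-2,0),(2,0,2,0)); ((0,0,0,0),(4,0,0,0),(4,0,0,0),(0,0,0,0));
  ((-2,0,2,0),(2,0,-2,0),(2,0,2,0),(2,0,2,0)); ((-1,1,1,1),(1,1,1,-1),(-1,1,1,1),(-1,-1,-1,1));
  ((2,0,2,0),(2,0,-2,0),(2,0,2,0),(-2,0,2,0)); ((0,0,0,0),(-2,0,0,-2),(2,0,0,2),(0,0,0,0));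
  ((2,0,2,0),(-2,0,-2,0),(-2,0,2,0),(-2,0,2,0)); ((2,0,2,0),(-2,0,2,0),(-2,0,-2,0),(-2,0,2,0));
  ((0,0,0,0),(0,2,-2,0),(0,2,-2,0),(0,0,0,0)); ((1,-1,1,1),(-1,1,-1,-1),(1,1,-1,1),(1,1,-1,1));
  ((2,0,-2,0),(2,0,-2,0),(2,0,2,0),(-2,0,-2,0)); ((-2,0,-2,0),(2,0,-2,0),(2,0,2,0),(2,0,-2,0));
  ((0,0,0,0),(2,0,0,-2),(-2,0,0,2),(0,0,0,0)); ((0,0,0,0),(0,0,-4,0),(0,0,4,0),(0,0,0,0));
  ((-1,1,1,1),(1,-1,-1,-1),(-1,-1,-1,1),(-1,-1,-1,1));
  ((1,1,1,-1),(1,-1,-1,-1),(-1,-1,-1,1),(1,-1,-1,-1));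
  ((2,0,-2,0),(-2,0,-2,0),(-2,0,2,0),(-2,0,-2,0));
  ((0,0,0,0),(0,-2,-2,0),(0,-2,-2,0),(0,0,0,0));
  ((-1,1,1,1),(-1,-1,-1,1),(1,-1,-1,-1),(-1,-1,-1,1));
  ((1,1,1,-1),(-1,-1,-1,1),(1,-1,-1,-1),(1,-1,-1,-1));
  ((0,0,0,0),(-2,0,0,2),(2,0,0,-2),(0,0,0,0)); ((-1,1,1,1),(-1,1,1,1),(1,1,1,-1),(-1,-1,-1,1));
  ((0,2,-2,0),(0,0,0,0),(0,0,0,0),(0,2,-2,0));
  ((-1,1,-1,-1),(-1,-1,1,-1),(-1,1,-1,-1),(1,1,-1,1));
  ((0,0,0,0),(0,-2,2,0),(0,2,-2,0),(0,0,0,0)); ((-1,1,-1,-1),(1,-1,1,1),(1,1,-1,1),(1,1,-1,1));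
  ((-1,-1,1,-1),(1,-1,1,1),(1,1,-1,1),(1,-1,1,1)); ((0,0,0,0),(0,0,4,0),(0,0,4,0),(0,0,0,0));
  ((0,0,0,0),(2,0,0,2),(2,0,0,2),(0,0,0,0)); ((-1,-1,-1,1),(1,1,1,-1),(-1,1,1,1),(-1,1,1,1));
  ((1,-1,1,1),(1,1,-1,1),(1,-1,1,1),(-1,-1,1,-1)); ((2,0,0,2),(0,0,0,0),(0,0,0,0),(-2,0,0,-2));
  ((1,-1,-1,-1),(-1,1,1,1),(1,1,1,-1),(1,1,1,-1));
  ((-1,-1,-1,1),(-1,1,1,1),(1,1,1,-1),(-1,1,1,1));
  ((-1,1,-1,-1),(1,1,-1,1),(1,-1,1,1),(1,1,-1,1)); ((-2,0,0,-2),(0,0,0,0),(0,0,0,0),(2,0,0,2));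
  ((-2,0,-2,0),(2,0,2,0),(-2,0,2,0),(-2,0,2,0));
  ((-1,-1,1,-1),(1,1,-1,1),(1,-1,1,1),(1,-1,1,1));
  ((-2,0,2,0),(2,0,2,0),(-2,0,2,0),(-2,0,-2,0)); ((0,0,0,0),(4,0,0,0),(-4,0,0,0),(0,0,0,0));
  ((0,0,0,0),(0,2,-2,0),(0,-2,2,0),(0,0,0,0)); ((-2,0,2,0),(2,0,-2,0),(-2,0,-2,0),(-2,0,-2,0));
  ((0,0,4,0),(0,0,0,0),(0,0,0,0),(0,0,-4,0)); ((0,0,0,0),(-2,0,0,-2),(-2,0,0,-2),(0,0,0,0));
  ((1,-1,1,1),(-1,-1,1,-1),(-1,1,-1,-1),(-1,-1,1,-1));
  ((1,-1,1,1),(1,-1,1,1),(1,1,-1,1),(-1,-1,1,-1));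
  ((1,-1,-1,-1),(1,1,1,-1),(-1,1,1,1),(1,1,1,-1));
  ((1,-1,1,1),(-1,1,-1,-1),(-1,-1,1,-1),(-1,-1,1,-1));
  ((2,0,-2,0),(2,0,-2,0),(-2,0,-2,0),(2,0,2,0));
  ((-1,1,-1,-1),(-1,1,-1,-1),(-1,-1,1,-1),(1,1,-1,1));
  ((-2,0,-2,0),(2,0,-2,0),(-2,0,-2,0),(-2,0,2,0)); ((0,0,0,0),(0,0,-4,0),(0,0,-4,0),(0,0,0,0));
  ((-2,0,2,0),(-2,0,-2,0),(2,0,-2,0),(-2,0,-2,0));
  ((2,0,-2,0),(-2,0,-2,0),(2,0,-2,0),(2,0,2,0));
  ((-2,0,-2,0),(-2,0,-2,0),(2,0,-2,0),(-2,0,2,0)); ((0,0,0,0),(-4,0,0,0),(4,0,0,0),(0,0,0,0));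
  ((-2,0,2,0),(-2,0,2,0),(2,0,2,0),(-2,0,-2,0));
  ((-1,1,1,1),(-1,-1,-1,1),(-1,1,1,1),(1,1,1,-1));
  ((-2,0,-2,0),(-2,0,2,0),(2,0,2,0),(-2,0,2,0)); ((0,0,0,0),(-2,0,0,2),(-2,0,0,2),(0,0,0,0));
  ((-1,1,1,1),(-1,1,1,1),(-1,-1,-1,1),(1,1,1,-1)); ((2,0,0,-2),(0,0,0,0),(0,0,0,0),(-2,0,0,2));
  ((1,-1,-1,-1),(1,-1,-1,-1),(1,1,1,-1),(-1,-1,-1,1));
  ((-1,1,-1,-1),(-1,-1,1,-1),(1,-1,1,1),(-1,-1,1,-1));
  ((1,-1,-1,-1),(-1,-1,-1,1),(-1,1,1,1),(-1,-1,-1,1));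
  ((0,0,0,0),(0,-2,2,0),(0,-2,2,0),(0,0,0,0));
  ((-1,1,-1,-1),(1,-1,1,1),(-1,-1,1,-1),(-1,-1,1,-1));
  ((1,-1,-1,-1),(-1,1,1,1),(-1,-1,-1,1),(-1,-1,-1,1));
  ((-1,-1,1,-1),(1,-1,1,1),(-1,-1,1,-1),(-1,1,-1,-1));
  ((1,-1,1,1),(1,-1,1,1),(-1,-1,1,-1),(1,1,-1,1));
  ((-1,-1,-1,1),(1,1,1,-1),(1,-1,-1,-1),(1,-1,-1,-1));
  ((-2,0,0,2),(0,0,0,0),(0,0,0,0),(2,0,0,-2)); ((0,0,-4,0),(0,0,0,0),(0,0,0,0),(0,0,4,0));
  ((-1,-1,-1,1),(-1,1,1,1),(-1,-1,-1,1),(1,-1,-1,-1));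
  ((-1,1,-1,-1),(1,1,-1,1),(-1,1,-1,-1),(-1,-1,1,-1));
  ((1,-1,-1,-1),(1,1,1,-1),(1,-1,-1,-1),(-1,-1,-1,1));
  ((-2,0,0,-2),(0,0,0,0),(0,0,0,0),(-2,0,0,-2));
  ((-1,-1,1,-1),(1,1,-1,1),(-1,1,-1,-1),(-1,1,-1,-1));
  ((0,-2,2,0),(0,0,0,0),(0,0,0,0),(0,2,-2,0));
  ((-1,-1,1,-1),(-1,1,-1,-1),(1,1,-1,1),(-1,1,-1,-1));
  ((1,-1,1,1),(-1,-1,1,-1),(1,-1,1,1),(1,1,-1,1)); ((0,0,4,0),(0,0,0,0),(0,0,0,0),(0,0,4,0));
  ((-1,-1,-1,1),(1,-1,-1,-1),(1,1,1,-1),(1,-1,-1,-1));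
  ((-1,-1,-1,1),(-1,-1,-1,1),(-1,1,1,1),(1,-1,-1,-1));
  ((-1,1,-1,-1),(-1,1,-1,-1),(1,1,-1,1),(-1,-1,1,-1));
  ((-1,-1,1,-1),(-1,-1,1,-1),(1,-1,1,1),(-1,1,-1,-1));
  ((-2,0,2,0),(-2,0,-2,0),(-2,0,2,0),(2,0,2,0));
  ((-2,0,-2,0),(-2,0,-2,0),(-2,0,2,0),(2,0,-2,0)); ((0,0,0,0),(-4,0,0,0),(-4,0,0,0),(0,0,0,0));
  ((-2,0,2,0),(-2,0,2,0),(-2,0,-2,0),(2,0,2,0));
  ((-2,0,-2,0),(-2,0,2,0),(-2,0,-2,0),(2,0,-2,0)); ((2,0,0,-2),(0,0,0,0),(0,0,0,0),(2,0,0,-2));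
  ((0,0,-4,0),(0,0,0,0),(0,0,0,0),(0,0,-4,0));
  ((1,-1,-1,-1),(1,-1,-1,-1),(-1,-1,-1,1),(1,1,1,-1));
  ((1,-1,-1,-1),(-1,-1,-1,1),(1,-1,-1,-1),(1,1,1,-1));
  ((-1,-1,-1,1),(-1,-1,-1,1),(1,-1,-1,-1),(-1,1,1,1));
  ((0,-2,-2,0),(0,0,0,0),(0,0,0,0),(0,2,2,0)); ((-2,0,0,2),(0,0,0,0),(0,0,0,0),(-2,0,0,2));
  ((-4,0,0,0),(0,0,0,0),(0,0,0,0),(4,0,0,0));
  ((-1,-1,-1,1),(1,-1,-1,-1),(-1,-1,-1,1),(-1,1,1,1));
  ((0,-2,2,0),(0,0,0,0),(0,0,0,0),(0,-2,2,0));
  ((-1,-1,1,-1),(-1,1,-1,-1),(-1,-1,1,-1),(1,-1,1,1));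
  ((-1,-1,1,-1),(-1,-1,1,-1),(-1,1,-1,-1),(1,-1,1,1));
  ((-4,0,0,0),(0,0,0,0),(0,0,0,0),(-4,0,0,0)); ((0,-2,-2,0),(0,0,0,0),(0,0,0,0),(0,-2,-2,0))]%Z.

Definition qmx0 : qmx := (quad0, quad0, quad0, quad0).

Definition g7 (i : nat) : qmx := nth qmx0 g7_mx i.

Definition elt (i : nat) : M := qmx4C (g7 i).

(* Row g gives the index of x_g * y for each element y, with (x_0, x_1, x_2) = (t, u, s). *)
Definition g7_lmul : seq (seq nat) := [::
  [:: 1; 4; 7; 10; 0; 14; 17; 19; 21; 23; 25; 18; 29; 32; 34; 36; 38; 40; 33; 2; 35; 47; 37; 49;
    43; 3; 45; 57; 46; 59; 58; 62; 64; 11; 5; 60; 71; 61; 73; 67; 6; 69; 81; 70; 53; 83; 63; 8;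
    42; 9; 79; 80; 86; 91; 90; 82; 93; 94; 92; 12; 20; 22; 100; 28; 13; 98; 108; 99; 77; 110;
    24; 15; 66; 16; 106; 107; 112; 117; 116; 109; 118; 48; 101; 26; 96; 78; 121; 113; 114; 115;
    123; 44; 30; 102; 27; 119; 120; 104; 128; 39; 31; 55; 56; 127; 134; 133; 129; 135; 72; 50;
    41; 105; 137; 130; 131; 132; 85; 68; 51; 136; 84; 52; 125; 54; 138; 139; 140; 141; 65; 74;
    87; 88; 89; 111; 97; 75; 95; 76; 142; 122; 143; 103; 124; 126];
  [:: 2; 5; 8; 11; 12; 15; 18; 20; 0; 24; 26; 28; 30; 33; 35; 1; 39; 41; 43; 44; 27; 48; 40; 50;
    52; 49; 55; 7; 3; 60; 4; 63; 65; 67; 68; 42; 72; 64; 74; 76; 73; 79; 14; 6; 54; 70; 84; 85;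
    51; 61; 88; 21; 9; 81; 19; 10; 91; 95; 94; 97; 66; 25; 101; 103; 100; 106; 29; 13; 78; 99;
    96; 111; 75; 22; 114; 36; 16; 108; 34; 17; 117; 119; 121; 122; 98; 87; 110; 47; 23; 116;
    118; 124; 123; 115; 102; 104; 45; 105; 46; 120; 37; 131; 58; 31; 57; 59; 32; 134; 136; 137;
    125; 113; 128; 71; 38; 133; 135; 138; 132; 53; 69; 126; 127; 130; 56; 86; 82; 83; 139; 141;
    92; 62; 90; 93; 142; 89; 77; 140; 80; 112; 109; 143; 107; 129];
  [:: 3; 6; 9; 0; 13; 16; 1; 18; 22; 2; 27; 29; 31; 4; 33; 37; 5; 42; 7; 45; 46; 43; 8; 51; 53;
    54; 56; 10; 58; 11; 61; 12; 66; 14; 69; 70; 67; 15; 75; 77; 78; 80; 17; 21; 82; 19; 20; 79;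
    86; 87; 89; 23; 90; 24; 25; 92; 26; 96; 28; 98; 99; 30; 102; 104; 105; 107; 32; 36; 109; 34;
    35; 106; 112; 113; 115; 38; 116; 39; 40; 47; 41; 120; 44; 119; 108; 114; 48; 49; 123; 50;
    52; 125; 55; 126; 127; 128; 57; 129; 59; 60; 130; 132; 62; 133; 63; 64; 71; 65; 84; 68; 136;
    131; 72; 73; 85; 74; 76; 139; 140; 83; 81; 138; 134; 88; 141; 91; 93; 94; 95; 97; 100; 111;
    101; 103; 122; 143; 110; 142; 121; 117; 118; 124; 137; 135]].

Definition lmul (g i : nat) : nat := nth 0 (nth [::] g7_lmul g) i.

Definition lmul_ok : bool :=
  all (fun g => all (fun i => (lmul g i < 144)%N &&
    (qmx_mul (g7 g.+1) (g7 i) == qmx_scale 4 (g7 (lmul g i)))) (iota 0 144)) (iota 0 3).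

Lemma lmul_check : lmul_ok. Proof. by vm_compute. Qed.

Lemma elt_lmul g i :
  (g < 3)%N -> (i < 144)%N -> elt g.+1 * elt i = elt (lmul g i) /\ (lmul g i < 144)%N.
Proof.
move=> ltg3 lti; have /all_iotaP/(_ i lti)/andP[-> /eqP E] := all_iotaP lmul_check ltg3.
by split => //; apply: qmx4C_mul.
Qed.

Lemma elt0 : elt 0 = 1.
Proof.
apply/matrixP => i j; rewrite /elt /qmx4C /= !mxE.
case: i => [[|[|//]] ?]; case: j => [[|[|//]] ?]; rewrite /= ?mul0r ?addr0 ?mulr0 //.
all: exact: mulVf four_neq0.
Qed.

(* A word in (x_0, x_1, x_2) for each element of G7. *)
Definition g7_word : seq (seq nat) := [:: [::]; [:: 0]; [:: 1]; [:: 2]; [:: 0; 0]; [:: 1; 0];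
  [:: 2; 0]; [:: 0; 1]; [:: 1; 1]; [:: 2; 1]; [:: 0; 2]; [:: 1; 2]; [:: 1; 0; 0]; [:: 2; 0; 0];
  [:: 0; 1; 0]; [:: 1; 1; 0]; [:: 2; 1; 0]; [:: 0; 2; 0]; [:: 1; 2; 0]; [:: 0; 0; 1];
  [:: 1; 0; 1]; [:: 0; 1; 1]; [:: 2; 1; 1]; [:: 0; 2; 1]; [:: 1; 2; 1]; [:: 0; 0; 2];
  [:: 1; 0; 2]; [:: 2; 0; 2]; [:: 1; 1; 2]; [:: 2; 1; 2]; [:: 1; 1; 0; 0]; [:: 2; 1; 0; 0];
  [:: 0; 2; 0; 0]; [:: 1; 2; 0; 0]; [:: 0; 0; 1; 0]; [:: 1; 0; 1; 0]; [:: 0; 1; 1; 0];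
  [:: 2; 1; 1; 0]; [:: 0; 2; 1; 0]; [:: 1; 2; 1; 0]; [:: 0; 0; 2; 0]; [:: 1; 0; 2; 0];
  [:: 2; 0; 2; 0]; [:: 1; 1; 2; 0]; [:: 1; 0; 0; 1]; [:: 2; 0; 0; 1]; [:: 2; 1; 0; 1];
  [:: 0; 0; 1; 1]; [:: 1; 0; 1; 1]; [:: 0; 0; 2; 1]; [:: 1; 0; 2; 1]; [:: 2; 0; 2; 1];
  [:: 1; 1; 2; 1]; [:: 2; 1; 2; 1]; [:: 2; 0; 0; 2]; [:: 1; 1; 0; 2]; [:: 2; 1; 0; 2];
  [:: 0; 2; 0; 2]; [:: 2; 1; 1; 2]; [:: 0; 2; 1; 2]; [:: 1; 2; 1; 2]; [:: 2; 1; 1; 0; 0];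
  [:: 0; 2; 1; 0; 0]; [:: 1; 2; 1; 0; 0]; [:: 0; 0; 2; 0; 0]; [:: 1; 0; 2; 0; 0];
  [:: 2; 0; 2; 0; 0]; [:: 1; 1; 2; 0; 0]; [:: 1; 0; 0; 1; 0]; [:: 2; 0; 0; 1; 0];
  [:: 2; 1; 0; 1; 0]; [:: 0; 0; 1; 1; 0]; [:: 1; 0; 1; 1; 0]; [:: 0; 0; 2; 1; 0];
  [:: 1; 0; 2; 1; 0]; [:: 2; 0; 2; 1; 0]; [:: 1; 1; 2; 1; 0]; [:: 2; 1; 2; 1; 0];
  [:: 2; 0; 0; 2; 0]; [:: 1; 1; 0; 2; 0]; [:: 2; 1; 0; 2; 0]; [:: 0; 2; 0; 2; 0];
  [:: 2; 1; 0; 0; 1]; [:: 0; 2; 0; 0; 1]; [:: 1; 2; 1; 0; 1]; [:: 1; 0; 0; 1; 1];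
  [:: 2; 1; 0; 1; 1]; [:: 2; 0; 0; 2; 1]; [:: 1; 1; 0; 2; 1]; [:: 2; 1; 0; 2; 1];
  [:: 2; 1; 1; 2; 1]; [:: 0; 2; 1; 2; 1]; [:: 2; 1; 1; 0; 2]; [:: 0; 2; 1; 0; 2];
  [:: 0; 0; 2; 0; 2]; [:: 1; 0; 2; 0; 2]; [:: 2; 0; 2; 0; 2]; [:: 1; 0; 2; 1; 2];
  [:: 2; 0; 2; 1; 2]; [:: 2; 1; 2; 1; 2]; [:: 0; 0; 2; 1; 0; 0]; [:: 1; 0; 2; 1; 0; 0];
  [:: 2; 0; 2; 1; 0; 0]; [:: 1; 1; 2; 1; 0; 0]; [:: 2; 1; 2; 1; 0; 0]; [:: 2; 0; 0; 2; 0; 0];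
  [:: 1; 1; 0; 2; 0; 0]; [:: 2; 1; 0; 2; 0; 0]; [:: 0; 2; 0; 2; 0; 0]; [:: 2; 1; 0; 0; 1; 0];
  [:: 0; 2; 0; 0; 1; 0]; [:: 1; 0; 0; 1; 1; 0]; [:: 2; 1; 0; 1; 1; 0]; [:: 2; 0; 0; 2; 1; 0];
  [:: 1; 1; 0; 2; 1; 0]; [:: 2; 1; 0; 2; 1; 0]; [:: 2; 1; 1; 2; 1; 0]; [:: 0; 2; 1; 2; 1; 0];
  [:: 0; 2; 1; 0; 2; 0]; [:: 1; 0; 2; 0; 2; 0]; [:: 2; 0; 2; 0; 2; 0]; [:: 1; 2; 1; 0; 0; 1];
  [:: 1; 0; 2; 0; 0; 1]; [:: 2; 1; 1; 0; 2; 1]; [:: 1; 0; 2; 1; 2; 1]; [:: 2; 0; 2; 1; 2; 1];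
  [:: 2; 0; 2; 1; 0; 2]; [:: 2; 0; 0; 2; 0; 2]; [:: 2; 1; 0; 2; 0; 2]; [:: 2; 1; 0; 2; 1; 2];
  [:: 2; 0; 0; 2; 1; 0; 0]; [:: 1; 1; 0; 2; 1; 0; 0]; [:: 2; 1; 0; 2; 1; 0; 0];
  [:: 2; 1; 1; 2; 1; 0; 0]; [:: 0; 2; 1; 2; 1; 0; 0]; [:: 0; 2; 1; 0; 2; 0; 0];
  [:: 1; 0; 2; 0; 2; 0; 0]; [:: 1; 2; 1; 0; 0; 1; 0]; [:: 1; 0; 2; 1; 2; 1; 0];
  [:: 2; 0; 2; 1; 2; 1; 0]; [:: 2; 0; 2; 1; 0; 2; 0]; [:: 2; 1; 0; 2; 1; 2; 1];
  [:: 1; 0; 2; 1; 2; 1; 0; 0]; [:: 2; 0; 2; 1; 0; 2; 0; 0]].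

Definition word (i : nat) : seq nat := nth [::] g7_word i.

Definition words_ok : bool :=
  all (fun i => all (gtn 3) (word i) && (foldr lmul 0 (word i) == i)) (iota 0 144).

Lemma words_check : words_ok. Proof. by vm_compute. Qed.

Lemma elt_foldr_lmul w i : all (gtn 3) w -> (i < 144)%N ->
  elt (foldr lmul i w) = foldr (fun g A => elt g.+1 * A) 1 w * elt i /\ (foldr lmul i w < 144)%N.
Proof.
move=> w3 lti; elim: w w3 => [|g w IH] /=; first by rewrite mul1r.
case/andP=> ltg3 /IH[E ltw]; have [<- ->] := elt_lmul ltg3 ltw.
by rewrite E mulrA.
Qed.

Definition g7_mul (i j : 'I_144) : 'I_144 := inZp (foldr lmul j (word i)).

Lemma eltM i j : elt (g7_mul i j) = elt i * elt j.
Proof.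
have /andP[w3 /eqP wi] := all_iotaP words_check (ltn_ord i).
have [E lt] := elt_foldr_lmul w3 (ltn_ord j).
have [Ei _] := elt_foldr_lmul w3 (isT : (0 < 144)%N).
by rewrite /g7_mul /= modn_small // E -{2}wi Ei elt0 mulr1.
Qed.

Definition g7_inv : seq nat := [:: 0; 4; 8; 3; 1; 47; 25; 30; 2; 28; 13; 22; 21; 10; 92; 19; 63;
  64; 61; 15; 87; 12; 11; 67; 73; 6; 79; 54; 9; 58; 7; 46; 32; 37; 71; 130; 59; 33; 39; 38; 40;
  50; 123; 49; 51; 55; 31; 5; 85; 43; 41; 44; 52; 102; 27; 45; 104; 105; 29; 36; 113; 18; 99;
  16; 17; 109; 90; 23; 118; 101; 100; 34; 116; 24; 110; 91; 121; 93; 94; 26; 97; 111; 98; 106;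
  114; 48; 103; 20; 96; 95; 66; 75; 14; 77; 78; 89; 88; 80; 82; 62; 70; 69; 53; 86; 56; 57; 83;
  134; 133; 65; 74; 81; 141; 60; 84; 136; 72; 135; 68; 132; 131; 76; 140; 42; 138; 126; 125;
  127; 129; 128; 35; 120; 119; 108; 107; 117; 115; 137; 124; 143; 122; 112; 142; 139].

Definition elts : seq 'I_144 := ords 143.

Definition g7_inv_idx (i : 'I_144) : 'I_144 := inZp (nth 0 g7_inv i).

Lemma g7_inv_check : all (fun i => g7_mul (g7_inv_idx i) i == ord0) elts.
Proof. by vm_compute. Qed.

Lemma eltVl (i : 'I_144) : elt (g7_inv_idx i) * elt i = 1.
Proof. by rewrite -eltM (eqP (all_ordsP g7_inv_check i)) elt0. Qed.

Lemma elt_unit (i : 'I_144) : elt i \is a GRing.unit.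
Proof. by have /mulmx1_unit[] := mulmx1C (eltVl i). Qed.

Lemma eltV (i : 'I_144) : (elt i)^-1 = elt (g7_inv_idx i).
Proof. by rewrite -[LHS]mul1r -(eltVl i) -mulrA mulrV ?mulr1 ?elt_unit. Qed.

Lemma g7_mx_uniq : uniq g7_mx && (size g7_mx == 144%N).
Proof. by vm_compute. Qed.

Lemma elt_inj : injective (fun i : 'I_144 => elt i).
Proof.
move=> i j /qmx4C_inj /eqP; have /andP[uniq_g7 /eqP size_g7] := g7_mx_uniq.
by rewrite /g7 nth_uniq ?size_g7 // => /eqP/val_inj.
Qed.

Definition t_idx : 'I_144 := inZp 1.
Definition u_idx : 'I_144 := inZp 2.
Definition s_idx : 'I_144 := inZp 3.

Lemma elt_t : elt t_idx = t_mx.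
Proof.
rewrite /elt /= /qmx4C /t_mx /=; congr (_ *: _); apply/matrixP => i j; rewrite !mxE.
by case: i => [[|[|//]] ?]; case: j => [[|[|//]] ?]; rewrite /= ?mul0r ?addr0; ring.
Qed.

Lemma elt_u : elt u_idx = u_mx.
Proof.
rewrite /elt /= /qmx4C /u_mx /t_mx /=; apply/matrixP => i j; rewrite !mxE.
by case: i => [[|[|//]] ?]; case: j => [[|[|//]] ?]; rewrite /= ?mxE /=; ring.
Qed.

Lemma elt_s : elt s_idx = s_mx.
Proof.
rewrite /elt /= /qmx4C /s_mx /=; apply/matrixP => i j; rewrite !mxE.
by case: i => [[|[|//]] ?]; case: j => [[|[|//]] ?]; rewrite /= ?mul0r ?addr0 ?mulr0; field.
Qed.

Lemma generated_elt (gens : seq M) (S : pred 'I_144) : S ord0 ->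
    {in gens, forall x, exists2 j : 'I_144, x = elt j &
       forall i, S i -> S (g7_mul j i) && S (g7_mul (g7_inv_idx j) i)} ->
  forall A, generated gens A -> exists2 i, S i & A = elt i.
Proof.
move=> S0 Sgens A; elim=> [|x g xg _ [i Si ->]|x g xg _ [i Si ->]].
- by exists ord0; rewrite ?elt0.
- have [j -> /(_ i Si)/andP[Sji _]] := Sgens x xg.
  by exists (g7_mul j i); rewrite ?eltM.
- have [j -> /(_ i Si)/andP[_ Sji]] := Sgens x xg.
  by exists (g7_mul (g7_inv_idx j) i); rewrite ?eltM ?eltV.
Qed.

Definition g5_idx : seq nat := [:: 0; 1; 2; 4; 5; 7; 8; 12; 14; 15; 19; 20; 21; 27; 29; 30; 34;
  35; 36; 42; 44; 47; 48; 51; 53; 54; 56; 57; 58; 59; 60; 66; 68; 71; 72; 75; 77; 78; 80; 81;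
  85; 87; 89; 90; 91; 92; 93; 94; 95; 97; 102; 104; 105; 107; 108; 111; 113; 115; 116; 117; 118;
  119; 123; 124; 130; 132; 133; 134; 135; 136; 138; 142].

Definition in_g5 (i : 'I_144) : bool := val i \in g5_idx.

Definition g5_closed_by (j : 'I_144) : bool :=
  all (fun i => in_g5 i ==> in_g5 (g7_mul j i) && in_g5 (g7_mul (g7_inv_idx j) i)) elts.

Lemma g5_check : [&& in_g5 ord0, g5_closed_by t_idx & g5_closed_by u_idx].
Proof. by vm_compute. Qed.

Lemma G5_elt A : G5 A -> exists2 i, in_g5 i & A = elt i.
Proof.
have /and3P[g5_0 g5_t g5_u] := g5_check.
move=> gA; apply: (generated_elt (S := in_g5) g5_0 _ gA) => x.
rewrite !inE => /orP[|] /eqP->.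
  by exists t_idx => [|i]; [rewrite elt_t | exact: implyP (all_ordsP g5_t i)].
by exists u_idx => [|i]; [rewrite elt_u | exact: implyP (all_ordsP g5_u i)].
Qed.

Lemma G5_unit A : G5 A -> A \is a GRing.unit.
Proof. by case/G5_elt=> i _ ->; apply: elt_unit. Qed.

Lemma G5_conj A B : G5 A -> G5 B -> G5 (B^-1 * A * B).
Proof.
apply: generated_conj => x; rewrite !inE => /orP[|] /eqP->.
  by rewrite -elt_t elt_unit.
by rewrite -elt_u elt_unit.
Qed.

Definition refl_idx : seq nat := [:: 1; 2; 4; 8; 27; 29; 34; 48; 54; 58; 71; 85; 108; 119; 132;
  133].

Definition refls : seq 'I_16 := ords 15.

Lemma mem_refls r : r \in refls.
Proof. exact: all_ordsP (allss refls) r. Qed.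

Definition refl (r : 'I_16) : 'I_144 := inZp (nth 0 refl_idx r).

Definition rho (r : 'I_16) : M := elt (refl r).

Lemma rho_unit r : rho r \is a GRing.unit.
Proof. exact: elt_unit. Qed.

Lemma g5_refl_check :
  all (fun i => in_g5 i ==> [|| i == ord0, has (fun r => refl r == i) refls
                              | qmx_det (qmx_shift4 (g7 i)) != quad0]) elts.
Proof. by vm_compute. Qed.

Lemma G5_reflection A : G5 A -> reflection A -> exists r, A = rho r.
Proof.
case/G5_elt=> i g5i ->; case/or3P: (implyP (all_ordsP g5_refl_check i) g5i).
- by move/eqP->; rewrite elt0 /reflection subrr mxrank0 => -[].
- by case/hasP=> r _ /eqP<-; exists r.
- by move/qmx4C_not_reflection.
Qed.

Lemma refl_inj_check : all (fun r => all (fun r' => (refl r == refl r') ==> (r == r')) refls) refls.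
Proof. by vm_compute. Qed.

Lemma rho_inj : injective rho.
Proof.
move=> r r' /elt_inj/eqP eq_rr'.
by apply/eqP; apply: (implyP (all_ordsP (all_ordsP refl_inj_check r) r')).
Qed.

(* [cls r = (f, e)]: [rho r] is G7-conjugate to [t] (f = false) or to [u] (f = true),
   and to its inverse when [e]. *)
Definition refl_class : seq nat := [:: 0; 2; 1; 3; 0; 2; 2; 0; 1; 3; 3; 1; 0; 2; 3; 1].

Definition cls (r : 'I_16) : bool * bool := let c := nth 0 refl_class r in (1 < c, odd c)%N.

(* For the class of R1 these are the classes of R1^-1, R2 and R2^-1. *)
Definition inv_class (k : bool * bool) : bool * bool := (k.1, ~~ k.2).
Definition twin_class (k : bool * bool) : bool * bool := (~~ k.1, k.2).
Definition opp_class (k : bool * bool) : bool * bool := (~~ k.1, ~~ k.2).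

(* Row y, column w: the index of rho y ^-1 * rho w * rho y. *)
Definition refl_conj : seq (seq nat) := [::
  [:: 0; 6; 2; 10; 7; 1; 5; 12; 11; 3; 9; 15; 4; 13; 14; 8];
  [:: 4; 1; 8; 3; 7; 13; 5; 0; 11; 14; 9; 2; 12; 6; 10; 15];
  [:: 0; 5; 2; 9; 12; 6; 1; 4; 15; 10; 3; 8; 7; 13; 14; 11];
  [:: 7; 1; 11; 3; 0; 6; 13; 4; 2; 10; 14; 8; 12; 5; 9; 15];
  [:: 12; 5; 15; 9; 4; 13; 6; 0; 8; 14; 10; 2; 7; 1; 3; 11];
  [:: 12; 6; 15; 10; 0; 5; 13; 7; 2; 9; 14; 11; 4; 1; 3; 8];
  [:: 7; 13; 11; 14; 4; 1; 6; 12; 8; 3; 10; 15; 0; 5; 9; 2];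
  [:: 4; 13; 8; 14; 12; 5; 1; 7; 15; 9; 3; 11; 0; 6; 10; 2];
  [:: 7; 13; 11; 14; 4; 1; 6; 12; 8; 3; 10; 15; 0; 5; 9; 2];
  [:: 4; 13; 8; 14; 12; 5; 1; 7; 15; 9; 3; 11; 0; 6; 10; 2];
  [:: 12; 5; 15; 9; 4; 13; 6; 0; 8; 14; 10; 2; 7; 1; 3; 11];
  [:: 12; 6; 15; 10; 0; 5; 13; 7; 2; 9; 14; 11; 4; 1; 3; 8];
  [:: 7; 1; 11; 3; 0; 6; 13; 4; 2; 10; 14; 8; 12; 5; 9; 15];
  [:: 0; 5; 2; 9; 12; 6; 1; 4; 15; 10; 3; 8; 7; 13; 14; 11];
  [:: 0; 6; 2; 10; 7; 1; 5; 12; 11; 3; 9; 15; 4; 13; 14; 8];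
  [:: 4; 1; 8; 3; 7; 13; 5; 0; 11; 14; 9; 2; 12; 6; 10; 15]].

Definition conjr (y w : 'I_16) : 'I_16 := inZp (nth 0 (nth [::] refl_conj y) w).

Lemma conjr_check : all (fun y => all (fun w => (cls (conjr y w) == cls w) &&
    (refl (conjr y w) == g7_mul (g7_mul (g7_inv_idx (refl y)) (refl w)) (refl y))) refls) refls.
Proof. by vm_compute. Qed.

Lemma cls_conjr y w : cls (conjr y w) = cls w.
Proof. by have /andP[/eqP] := all_ordsP (all_ordsP conjr_check y) w. Qed.

Lemma rho_conjr y w : rho (conjr y w) = (rho y)^-1 * rho w * rho y.
Proof.
have /andP[_ /eqP E] := all_ordsP (all_ordsP conjr_check y) w.
by rewrite /rho E !eltM eltV.
Qed.

Lemma conjrr y : conjr y y = y.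
Proof. by apply: rho_inj; rewrite rho_conjr mulVr ?mul1r ?rho_unit. Qed.

Lemma conjr_inj y : injective (conjr y).
Proof.
move=> w w' /(congr1 rho); rewrite !rho_conjr => /(mulIr (rho_unit y)).
have yVU : (rho y)^-1 \is a GRing.unit by rewrite unitrV rho_unit.
by move/(mulrI yVU)/rho_inj.
Qed.

Definition class_elt (k : bool * bool) (A : M) : Prop := exists2 r, A = rho r & cls r = k.

Definition class_conj_ok (x : 'I_144) : bool :=
  all (fun r => has (fun r' => (cls r' == cls r) &&
                  (refl r' == g7_mul (g7_mul (g7_inv_idx x) (refl r)) x)) refls &&
                has (fun r' => (cls r' == cls r) &&
                  (refl r' == g7_mul (g7_mul x (refl r)) (g7_inv_idx x))) refls) refls.

Lemma class_conj_check : [&& class_conj_ok s_idx, class_conj_ok t_idx & class_conj_ok u_idx].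
Proof. by vm_compute. Qed.

Lemma class_elt_conj_gen k x A : x \in [:: s_mx; t_mx; u_mx] -> class_elt k A ->
  class_elt k (x^-1 * A * x) /\ class_elt k (x * A * x^-1).
Proof.
have /and3P[ok_s ok_t ok_u] := class_conj_check.
have ok_x : {in [:: s_mx; t_mx; u_mx], forall x, exists2 j : 'I_144, x = elt j & class_conj_ok j}.
  by move=> y; rewrite !inE => /or3P[] /eqP->; [exists s_idx; rewrite ?elt_s |
    exists t_idx; rewrite ?elt_t | exists u_idx; rewrite ?elt_u].
move=> /ok_x[j -> ok_j] [r -> <-].
have /andP[/hasP[r1 _ /andP[/eqP k1 /eqP E1]] /hasP[r2 _ /andP[/eqP k2 /eqP E2]]] :=
  all_ordsP ok_j r.
split; [exists r1; last exact: k1 | exists r2; last exact: k2].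
  by rewrite /rho E1 !eltM eltV.
by rewrite /rho E2 !eltM eltV.
Qed.

Lemma G7_unit g : G7 g -> g \is a GRing.unit.
Proof.
apply: generated_unit => x; rewrite !inE => /or3P[] /eqP->.
- by rewrite -elt_s elt_unit.
- by rewrite -elt_t elt_unit.
- by rewrite -elt_u elt_unit.
Qed.

Lemma class_elt_G7_conj k g A : G7 g -> class_elt k A -> class_elt k (g^-1 * A * g).
Proof.
move=> gG; elim: gG A => [|x h xg hG IH|x h xg hG IH] A kA.
- by rewrite invr1 mul1r mulr1.
- have xU : x \is a GRing.unit by apply: G7_unit; apply: generated_mem.
  have -> : (x * h)^-1 * A * (x * h) = h^-1 * (x^-1 * A * x) * h.
    by rewrite (invrM xU (G7_unit hG)) !mulrA.
  by apply: IH; case: (class_elt_conj_gen xg kA).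
- have xU : x^-1 \is a GRing.unit by rewrite unitrV; apply: G7_unit; apply: generated_mem.
  have -> : (x^-1 * h)^-1 * A * (x^-1 * h) = h^-1 * (x * A * x^-1) * h.
    by rewrite (invrM xU (G7_unit hG)) invrK !mulrA.
  by apply: IH; case: (class_elt_conj_gen xg kA).
Qed.

Lemma rho_inv_check : all (fun r => has (fun r' => (cls r' == inv_class (cls r)) &&
                                   (refl r' == g7_inv_idx (refl r))) refls) refls.
Proof. by vm_compute. Qed.

Lemma class_elt_inv k A : class_elt k A^-1 -> class_elt (inv_class k) A.
Proof.
case=> r EA <-; have /hasP[r' _ /andP[/eqP kr' /eqP Er']] := all_ordsP rho_inv_check r.
by exists r' => //; rewrite -[A]invrK EA /rho Er' eltV.
Qed.

Lemma class_elt_t : class_elt (false, false) t_mx.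
Proof. by exists (inZp 0); rewrite -?elt_t. Qed.

Lemma class_elt_u : class_elt (true, false) u_mx.
Proof. by exists (inZp 1); rewrite -?elt_u. Qed.

Lemma reflection_class K : K = R1 \/ K = R1inv \/ K = R2 \/ K = R2inv ->
  exists k, forall x, K x -> class_elt k x.
Proof.
have R1_class x : R1 x -> class_elt (false, false) x.
  by case=> g [gG ->]; apply: class_elt_G7_conj gG class_elt_t.
have R2_class x : R2 x -> class_elt (true, false) x.
  by case=> g [gG ->]; apply: class_elt_G7_conj gG class_elt_u.
case=> [->|[->|[->|->]]].
- by exists (false, false).
- by exists (false, true) => x /R1_class/class_elt_inv.
- by exists (true, false).
- by exists (true, true) => x /R2_class/class_elt_inv.
Qed.

(* The subgroups generated by the reflections of either family. *)
Definition t_family_group : seq nat := [:: 0; 1; 4; 27; 42; 48; 54; 57; 66; 72; 78; 81; 85; 90;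
  94; 105; 108; 111; 116; 123; 124; 133; 138; 142].

Definition u_family_group : seq nat := [:: 0; 2; 8; 29; 34; 53; 58; 60; 66; 68; 71; 78; 81; 90;
  94; 102; 107; 111; 113; 118; 119; 132; 134; 142].

Definition family_group (f : bool) : seq nat := if f then u_family_group else t_family_group.

Definition family_group_ok (f : bool) : bool :=
  [&& 0%N \in family_group f, val (if f then t_idx else u_idx) \notin family_group f &
      all (fun r => ((cls r).1 == f) ==> all (fun i => (val i \in family_group f) ==>
        (val (g7_mul (refl r) i) \in family_group f) &&
        (val (g7_mul (g7_inv_idx (refl r)) i) \in family_group f)) elts) refls].

Lemma family_group_check : family_group_ok false && family_group_ok true.
Proof. by vm_compute. Qed.

Lemma generates_G5_other_family L f :
  generates (map rho L) G5 -> has (fun r => (cls r).1 != f) L.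
Proof.
move=> genL; apply/negPn/negP => /hasPn sameL.
have /and3P[f0 fx f_closed] : family_group_ok f by case/andP: family_group_check; case: (f).
have /genL : G5 (elt (if f then t_idx else u_idx)).
  by apply: generated_mem; case: (f); rewrite ?elt_t ?elt_u !inE eqxx ?orbT.
case/(generated_elt (S := fun i : 'I_144 => val i \in family_group f) f0).
  move=> y /mapP[r rL ->]; exists (refl r) => // i fi.
  have fr : (cls r).1 == f by rewrite -[_ == _]negbK sameL.
  exact: implyP (all_ordsP (implyP (all_ordsP f_closed r) fr) i) fi.
by move=> i fi /elt_inj ix; move: fx; rewrite ix fi.
Qed.

(* Entry (p, q) is empty unless rho p and rho q generate G5, in which case it holds words
   for t and u in the letters 0, 1, 2, 3 standing for rho p, rho q and their inverses. *)
Definition gen_pair_words : seq (seq (seq (seq nat))) := [::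
  [:: [::]; [:: [:: 0]; [:: 1]]; [::]; [:: [:: 0]; [:: 3]]; [::]; [:: [:: 0]; [:: 2; 1; 0]];
    [:: [:: 0]; [:: 0; 1; 2]]; [::]; [::]; [:: [:: 0]; [:: 2; 3; 0]]; [:: [:: 0]; [:: 0; 3; 2]];
    [::]; [::]; [::]; [::]; [::]];
  [:: [:: [:: 1]; [:: 0]]; [::]; [:: [:: 3]; [:: 0]]; [::]; [:: [:: 0; 1; 2]; [:: 0]]; [::];
    [::]; [:: [:: 2; 1; 0]; [:: 0]]; [:: [:: 0; 3; 2]; [:: 0]]; [::]; [::];
    [:: [:: 2; 3; 0]; [:: 0]]; [::]; [::]; [::]; [::]];
  [:: [::]; [:: [:: 2]; [:: 1]]; [::]; [:: [:: 2]; [:: 3]]; [::]; [:: [:: 2]; [:: 0; 1; 2]];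
    [:: [:: 2]; [:: 2; 1; 0]]; [::]; [::]; [:: [:: 2]; [:: 0; 3; 2]]; [:: [:: 2]; [:: 2; 3; 0]];
    [::]; [::]; [::]; [::]; [::]];
  [:: [:: [:: 1]; [:: 2]]; [::]; [:: [:: 3]; [:: 2]]; [::]; [:: [:: 2; 1; 0]; [:: 2]]; [::];
    [::]; [:: [:: 0; 1; 2]; [:: 2]]; [:: [:: 2; 3; 0]; [:: 2]]; [::]; [::];
    [:: [:: 0; 3; 2]; [:: 2]]; [::]; [::]; [::]; [::]];
  [:: [::]; [:: [:: 1; 0; 3]; [:: 1]]; [::]; [:: [:: 3; 0; 1]; [:: 3]]; [::];
    [:: [:: 3; 0; 1]; [:: 0; 1; 2]]; [::]; [::]; [::]; [:: [:: 1; 0; 3]; [:: 0; 3; 2]]; [::];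
    [::]; [::]; [:: [:: 2; 1; 0; 3; 0]; [:: 2; 1; 0]]; [:: [:: 2; 3; 0; 1; 0]; [:: 2; 3; 0]];
    [::]];
  [:: [:: [:: 1]; [:: 3; 0; 1]]; [::]; [:: [:: 3]; [:: 1; 0; 3]]; [::];
    [:: [:: 2; 1; 0]; [:: 1; 0; 3]]; [::]; [::]; [::]; [:: [:: 2; 3; 0]; [:: 3; 0; 1]]; [::];
    [::]; [::]; [:: [:: 0; 1; 2]; [:: 2; 1; 0; 3; 0]]; [::]; [::];
    [:: [:: 0; 3; 2]; [:: 2; 3; 0; 1; 0]]];
  [:: [:: [:: 1]; [:: 1; 0; 3]]; [::]; [:: [:: 3]; [:: 3; 0; 1]]; [::]; [::]; [::]; [::];
    [:: [:: 0; 1; 2]; [:: 3; 0; 1]]; [::]; [::]; [::]; [:: [:: 0; 3; 2]; [:: 1; 0; 3]];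
    [:: [:: 2; 1; 0]; [:: 2; 1; 0; 3; 0]]; [::]; [::]; [:: [:: 2; 3; 0]; [:: 2; 3; 0; 1; 0]]];
  [:: [::]; [:: [:: 3; 0; 1]; [:: 1]]; [::]; [:: [:: 1; 0; 3]; [:: 3]]; [::]; [::];
    [:: [:: 1; 0; 3]; [:: 2; 1; 0]]; [::]; [::]; [::]; [:: [:: 3; 0; 1]; [:: 2; 3; 0]]; [::];
    [::]; [:: [:: 2; 1; 0; 3; 0]; [:: 0; 1; 2]]; [:: [:: 2; 3; 0; 1; 0]; [:: 0; 3; 2]]; [::]];
  [:: [::]; [:: [:: 1; 2; 3]; [:: 1]]; [::]; [:: [:: 3; 2; 1]; [:: 3]]; [::];
    [:: [:: 3; 2; 1]; [:: 2; 1; 0]]; [::]; [::]; [::]; [:: [:: 1; 2; 3]; [:: 2; 3; 0]]; [::];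
    [::]; [::]; [:: [:: 2; 3; 2; 1; 0]; [:: 0; 1; 2]]; [:: [:: 2; 1; 2; 3; 0]; [:: 0; 3; 2]];
    [::]];
  [:: [:: [:: 1]; [:: 3; 2; 1]]; [::]; [:: [:: 3]; [:: 1; 2; 3]]; [::];
    [:: [:: 0; 1; 2]; [:: 1; 2; 3]]; [::]; [::]; [::]; [:: [:: 0; 3; 2]; [:: 3; 2; 1]]; [::];
    [::]; [::]; [:: [:: 2; 1; 0]; [:: 2; 3; 2; 1; 0]]; [::]; [::];
    [:: [:: 2; 3; 0]; [:: 2; 1; 2; 3; 0]]];
  [:: [:: [:: 1]; [:: 1; 2; 3]]; [::]; [:: [:: 3]; [:: 3; 2; 1]]; [::]; [::]; [::]; [::];
    [:: [:: 2; 1; 0]; [:: 3; 2; 1]]; [::]; [::]; [::]; [:: [:: 2; 3; 0]; [:: 1; 2; 3]];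
    [:: [:: 0; 1; 2]; [:: 2; 3; 2; 1; 0]]; [::]; [::]; [:: [:: 0; 3; 2]; [:: 2; 1; 2; 3; 0]]];
  [:: [::]; [:: [:: 3; 2; 1]; [:: 1]]; [::]; [:: [:: 1; 2; 3]; [:: 3]]; [::]; [::];
    [:: [:: 1; 2; 3]; [:: 0; 1; 2]]; [::]; [::]; [::]; [:: [:: 3; 2; 1]; [:: 0; 3; 2]]; [::];
    [::]; [:: [:: 2; 3; 2; 1; 0]; [:: 2; 1; 0]]; [:: [:: 2; 1; 2; 3; 0]; [:: 2; 3; 0]]; [::]];
  [:: [::]; [::]; [::]; [::]; [::]; [:: [:: 1; 0; 3]; [:: 3; 0; 1; 2; 1]];
    [:: [:: 3; 0; 1]; [:: 3; 0; 1; 2; 1]]; [::]; [::]; [:: [:: 3; 0; 1]; [:: 3; 2; 3; 0; 1]];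
    [:: [:: 1; 0; 3]; [:: 3; 2; 3; 0; 1]]; [::]; [::];
    [:: [:: 2; 1; 0; 3; 0]; [:: 3; 0; 1; 2; 1]]; [:: [:: 2; 3; 0; 1; 0]; [:: 3; 2; 3; 0; 1]];
    [::]];
  [:: [::]; [::]; [::]; [::]; [:: [:: 3; 0; 1; 2; 1]; [:: 3; 0; 1]]; [::]; [::];
    [:: [:: 3; 0; 1; 2; 1]; [:: 1; 0; 3]]; [:: [:: 3; 2; 3; 0; 1]; [:: 1; 0; 3]]; [::]; [::];
    [:: [:: 3; 2; 3; 0; 1]; [:: 3; 0; 1]]; [:: [:: 3; 0; 1; 2; 1]; [:: 2; 1; 0; 3; 0]]; [::];
    [::]; [:: [:: 3; 2; 3; 0; 1]; [:: 2; 3; 0; 1; 0]]];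
  [:: [::]; [::]; [::]; [::]; [:: [:: 3; 2; 1; 0; 1]; [:: 3; 2; 1]]; [::]; [::];
    [:: [:: 3; 2; 1; 0; 1]; [:: 1; 2; 3]]; [:: [:: 3; 0; 3; 2; 1]; [:: 1; 2; 3]]; [::]; [::];
    [:: [:: 3; 0; 3; 2; 1]; [:: 3; 2; 1]]; [:: [:: 3; 2; 1; 0; 1]; [:: 2; 3; 2; 1; 0]]; [::];
    [::]; [:: [:: 3; 0; 3; 2; 1]; [:: 2; 1; 2; 3; 0]]];
  [:: [::]; [::]; [::]; [::]; [::]; [:: [:: 1; 2; 3]; [:: 3; 2; 1; 0; 1]];
    [:: [:: 3; 2; 1]; [:: 3; 2; 1; 0; 1]]; [::]; [::]; [:: [:: 3; 2; 1]; [:: 3; 0; 3; 2; 1]];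
    [:: [:: 1; 2; 3]; [:: 3; 0; 3; 2; 1]]; [::]; [::];
    [:: [:: 2; 3; 2; 1; 0]; [:: 3; 2; 1; 0; 1]]; [:: [:: 2; 1; 2; 3; 0]; [:: 3; 0; 3; 2; 1]];
    [::]]].

Definition pair_words (p q : 'I_16) : seq (seq nat) := nth [::] (nth [::] gen_pair_words p) q.

Definition gen_pair (p q : 'I_16) : bool := pair_words p q != [::].

Definition letter (p q : 'I_16) (l : nat) : 'I_144 :=
  nth ord0 [:: refl p; refl q; g7_inv_idx (refl p); g7_inv_idx (refl q)] l.

Definition pair_word (p q : 'I_16) (w : seq nat) : 'I_144 :=
  foldr (fun l => g7_mul (letter p q l)) ord0 w.

Lemma gen_pair_check : all (fun p => all (fun q => gen_pair p q ==>
  (map (pair_word p q) (pair_words p q) == [:: t_idx; u_idx])) refls) refls.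
Proof. by vm_compute. Qed.

Lemma generated_pair_word (gens : seq M) p q w :
  rho p \in gens -> rho q \in gens -> generated gens (elt (pair_word p q w)).
Proof.
move=> pg qg; elim: w => [|l w IH]; first by rewrite -[elt _]/(elt 0) elt0; apply: gen_one.
rewrite -[pair_word _ _ _]/(g7_mul (letter p q l) (pair_word p q w)) eltM.
case: l => [|[|[|[|l]]]].
- exact: gen_mul pg IH.
- exact: gen_mul qg IH.
- by rewrite -[letter _ _ _]/(g7_inv_idx (refl p)) -eltV; apply: gen_mulV pg IH.
- by rewrite -[letter _ _ _]/(g7_inv_idx (refl q)) -eltV; apply: gen_mulV qg IH.
- by rewrite /letter /= nth_nil -[elt ord0]/(elt 0) elt0 mul1r.
Qed.

Lemma gen_pair_G5 (gens : seq M) p q : {in gens, forall x, x \is a GRing.unit} ->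
  rho p \in gens -> rho q \in gens -> gen_pair p q -> forall A, G5 A -> generated gens A.
Proof.
move=> gU pg qg pq A gA; apply: (generated_trans gU _ gA) => x.
have /eqP words_tu := implyP (all_ordsP (all_ordsP gen_pair_check p) q) pq.
rewrite !inE => /orP[] /eqP->; rewrite -?elt_t -?elt_u.
  have /mapP[w _ ->] : t_idx \in map (pair_word p q) (pair_words p q) by rewrite words_tu mem_head.
  exact: generated_pair_word.
have /mapP[w _ ->] : u_idx \in map (pair_word p q) (pair_words p q).
  by rewrite words_tu !inE eqxx orbT.
exact: generated_pair_word.
Qed.

Notation rreach := (@hreach 'I_16 ord0 conjr).

Definition has_gen_pair (ys : seq 'I_16) : bool := has (fun p => has (gen_pair p) ys) ys.

Lemma has_gen_pair_catl ys zs : has_gen_pair ys -> has_gen_pair (ys ++ zs).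
Proof.
case/hasP=> p pys /hasP[q qys pq]; apply/hasP; exists p; rewrite ?mem_cat ?pys //.
by apply/hasP; exists q; rewrite ?mem_cat ?qys.
Qed.

Definition apply_moves (ms : seq nat) (B : seq 'I_16) : seq 'I_16 :=
  foldl (fun s i => hmove ord0 conjr i s) B ms.

Lemma rreach_apply_moves ms B :
  all (fun i => i.+2 <= size B)%N ms -> rreach B (apply_moves ms B).
Proof.
elim: ms B => [|i ms IH] B /=; first by move=> _; apply: hreach_refl.
case/andP=> lti ms_ok; apply: (hreach_step lti); apply: IH.
by rewrite size_hmove.
Qed.

Definition blocks (Cs : seq (seq 'I_16)) : seq (seq 'I_16) :=
  foldr (fun C bs => [seq c :: b | c <- C, b <- bs]) [:: [::]] Cs.

Lemma mem_blocks B Cs : all2 (fun b C => b \in C) B Cs -> B \in blocks Cs.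
Proof.
elim: Cs B => [|C Cs IH] [|b B] //= /andP[bC /IH BCs].
exact: (allpairs_f (fun c b => c :: b) bC BCs).
Qed.

(* Blocks with equal first two entries are skipped: they never occur in the argument. *)
Definition block_check (mss : seq (seq nat)) (Cs : seq (seq 'I_16)) (X : seq 'I_16) : bool :=
  all (fun B => (nth ord0 B 0 == nth ord0 B 1) ||
    let ends := [seq apply_moves ms B | ms <- mss & all (fun i => i.+2 <= size B)%N ms] in
    let ys C := take (size B).-1 C in
    all (fun x => has (fun C => (C == rcons (ys C) x) && has_gen_pair (ys C)) ends) X)
  (blocks Cs).

Lemma block_check_reach mss Cs X B x : block_check mss Cs X -> all2 (fun b C => b \in C) B Cs ->
  nth ord0 B 0 != nth ord0 B 1 -> x \in X -> exists2 ys, rreach B (rcons ys x) & has_gen_pair ys.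
Proof.
move=> ok BCs B01 xX; have := allP ok B (mem_blocks BCs); rewrite (negbTE B01) /=.
case/allP/(_ x xX)/hasP=> C /mapP[ms]; rewrite mem_filter => /andP[ms_ok _] ->.
case/andP=> /eqP C_eq gen_ys; exists (take (size B).-1 (apply_moves ms B)) => //.
by rewrite -C_eq; apply: rreach_apply_moves.
Qed.

Definition members (k : bool * bool) : seq 'I_16 := [seq r <- refls | cls r == k].

Lemma mem_members k r : (r \in members k) = (cls r == k).
Proof. by rewrite mem_filter mem_refls andbT. Qed.

Definition classes : seq (bool * bool) :=
  [:: (false, false); (false, true); (true, false); (true, true)].

Lemma mem_classes k : k \in classes.
Proof. by case: k => [[] []]. Qed.

(* Sequences of Hurwitz moves, by position, tried on the blocks of each case; found by
   computer search. *)
Definition moves_A : seq (seq nat) := [:: [:: 2; 1; 1; 1; 2]; [:: 0; 0; 1; 2; 2; 2];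
  [:: 0; 1; 1; 1; 2]; [:: 0; 0; 1; 1; 1; 2]; [:: 1; 1; 1; 2]; [:: 1; 0; 2; 1; 1; 2; 2];
  [:: 1; 2; 2; 2]; [:: 0; 1; 2; 2; 1; 1; 2]; [:: 0; 0; 1; 2]; [:: 0; 1; 2];
  [:: 1; 2; 2; 1; 1; 2]; [:: 1; 2]].

Definition moves_B : seq (seq nat) := [:: [:: 1; 1; 1; 2]; [:: 0; 0; 1; 2; 2; 2];
  [:: 1; 2; 2; 2]; [:: 0; 1; 2; 2; 2]; [:: 1; 2]; [:: 0; 0; 1; 2]; [:: 0; 1; 2];
  [:: 0; 2; 1; 1; 1; 2]; [:: 2; 1; 1; 1; 2]; [:: 1; 1; 0; 0; 1; 2]].

Definition moves_C : seq (seq nat) := [:: [:: 1; 2; 2; 2; 3]; [:: 1; 1; 1; 2; 3];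
  [:: 2; 1; 1; 1; 2; 3]; [:: 1; 2; 3; 3; 2; 2; 3]; [:: 0; 1; 2; 3; 3; 2; 2; 3];
  [:: 0; 1; 2; 2; 1; 1; 2; 3]; [:: 0; 0; 1; 2; 2; 1; 1; 2; 3]; [:: 1; 2; 2; 1; 1; 2; 3];
  [:: 1; 0; 0; 1; 1; 2; 3]; [:: 1; 0; 0; 0; 1; 2; 3]; [:: 0; 0; 1; 2; 3];
  [:: 1; 1; 0; 0; 1; 2; 3]; [:: 1; 2; 2; 2; 2; 2; 3]].

Definition case_A_ok (k : bool * bool) : bool :=
  block_check moves_A [:: members k; members k; members (twin_class k); refls] (members k).

Definition case_B_ok (k : bool * bool) : bool :=
  block_check moves_B [:: members k; members k; members (opp_class k); members (inv_class k)]
    (members k).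

Definition case_C_ok (k : bool * bool) : bool :=
  let D := members k ++ members (opp_class k) in
  block_check moves_C [:: members k; members k; members (opp_class k); D; D] (members k).

Lemma case_A_check : all case_A_ok classes. Proof. by vm_compute. Qed.
Lemma case_B_check : all case_B_ok classes. Proof. by vm_compute. Qed.
Lemma case_C_check : all case_C_ok classes. Proof. by vm_compute. Qed.

Definition front (y : 'I_16) (L : seq 'I_16) : seq 'I_16 :=
  map (conjr y) (take (index y L) L) ++ drop (index y L).+1 L.

Lemma split_index (T : eqType) (y : T) L :
  y \in L -> L = take (index y L) L ++ y :: drop (index y L).+1 L.
Proof. by move=> yL; rewrite -{2}(nth_index y yL) -drop_nth ?index_mem ?cat_take_drop. Qed.

Lemma rreach_front y L : y \in L -> rreach L (y :: front y L).
Proof. by move=> /split_index {1}->; apply: hreach_to_front. Qed.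

Lemma size_front y L : y \in L -> size (front y L) = (size L).-1.
Proof. by move=> /split_index {2}->; rewrite !size_cat size_map /= addnS. Qed.

Lemma front_cls y L z : z \in front y L -> cls z \in map cls L.
Proof.
rewrite mem_cat => /orP[/mapP[w /mem_take wL ->]|/mem_drop zL]; last exact: map_f.
by rewrite cls_conjr map_f.
Qed.

Lemma front_image y L w : y \in L -> w \in L -> w != y ->
  exists2 w', w' \in front y L & cls w' = cls w /\ w' != y.
Proof.
move=> yL; rewrite {1}(split_index yL) mem_cat inE => /orP[wl|/orP[/eqP->|wr]] wy.
- exists (conjr y w); first by rewrite mem_cat map_f.
  split; first exact: cls_conjr.
  by apply: contra wy => /eqP; rewrite -{2}(conjrr y) => /conjr_inj->.
- by rewrite eqxx in wy.
- by exists w; rewrite ?mem_cat ?wr ?orbT.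
Qed.

Lemma other_family_class k k' : k'.1 != k.1 -> k' != twin_class k -> k' = opp_class k.
Proof. by case: k k' => [[] []] [[] []]. Qed.

Lemma same_family_class k k' :
  k' != twin_class k -> k' != opp_class k -> k' != inv_class k -> k' = k.
Proof. by case: k k' => [[] []] [[] []]. Qed.

Lemma rreach_block L B R x :
  rreach L (B ++ R) -> (exists2 ys, rreach B (rcons ys x) & has_gen_pair ys) ->
  exists2 ys, rreach L (rcons ys x) & has_gen_pair ys.
Proof.
move=> LBR [ys Bys gen_ys]; have [R' back] := hreach_to_back ord0 conjr_inj ys x R.
exists (ys ++ R'); last exact: has_gen_pair_catl.
apply: hreach_trans LBR (hreach_trans (hreach_catr R Bys) _).
by rewrite cat_rcons -cats1 -catA.
Qed.

Lemma case_A k a b L x z : a != b -> cls a = k -> cls b = k -> cls x = k ->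
  z \in L -> cls z = twin_class k -> (1 < size L)%N ->
  exists2 ys, rreach [:: a, b & L] (rcons ys x) & has_gen_pair ys.
Proof.
move=> ab ka kb kx zL kz ltL.
have : (0 < size (front z L))%N by rewrite size_front // -subn1 subn_gt0.
case E: (front z L) => [//|d R] _.
apply: (@rreach_block _ [:: a; b; z; d] R).
  by rewrite /= -E; apply: (hreach_catl [:: a; b]); apply: rreach_front.
apply: (block_check_reach (allP case_A_check k (mem_classes k))) => //.
by rewrite /= !mem_members ka kb kz mem_refls !eqxx.
by rewrite mem_members kx.
Qed.

Lemma case_B k a b c L x z : a != b -> cls a = k -> cls b = k -> cls x = k ->
  cls c = opp_class k -> z \in L -> cls z = inv_class k ->
  exists2 ys, rreach [:: a, b, c & L] (rcons ys x) & has_gen_pair ys.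
Proof.
move=> ab ka kb kx kc zL kz.
apply: (@rreach_block _ [:: a; b; c; z] (front z L)).
  by apply: (hreach_catl [:: a; b; c]); apply: rreach_front.
apply: (block_check_reach (allP case_B_check k (mem_classes k))) => //.
by rewrite /= !mem_members ka kb kc kz !eqxx.
by rewrite mem_members kx.
Qed.

Lemma case_C k a b c L x : a != b -> cls a = k -> cls b = k -> cls x = k ->
  cls c = opp_class k -> {in L, forall z, cls z = k \/ cls z = opp_class k} -> (1 < size L)%N ->
  exists2 ys, rreach [:: a, b, c & L] (rcons ys x) & has_gen_pair ys.
Proof.
move=> ab ka kb kx kc kL; case: L kL => [|d [|e R]] //= kL _.
have kD z : z \in [:: d, e & R] -> z \in members k ++ members (opp_class k).
  by move/kL; rewrite mem_cat !mem_members => -[] ->; rewrite eqxx ?orbT.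
apply: (@rreach_block _ [:: a; b; c; d; e] R); first exact: hreach_refl.
apply: (block_check_reach (allP case_C_check k (mem_classes k))) => //.
by rewrite /= !mem_members ka kb kc !kD ?inE ?eqxx ?orbT.
by rewrite mem_members kx.
Qed.

Lemma two_to_front L k a b c : a \in L -> b \in L -> a != b -> cls a = k -> cls b = k ->
    c \in L -> (cls c).1 != k.1 ->
  exists b' c' L', [/\ rreach L [:: a, b' & L'], a != b', cls b' = k, c' \in L'
                     & cls c' = cls c /\ size L' = (size L).-2].
Proof.
move=> aL bL ab ka kb cL kc.
have ba : b != a by rewrite eq_sym.
have ca : c != a by apply: contraNneq kc => ->; rewrite ka.
have [b' b'L1 [kb' b'a]] := front_image aL bL ba.
have [c' c'L1 [kc' _]] := front_image aL cL ca.
have c'b' : c' != b' by apply: contraNneq kc => E; rewrite -kc' E kb' kb.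
have [c'' c''L2 [kc'' _]] := front_image b'L1 c'L1 c'b'.
exists b', c'', (front b' (front a L)); split => //.
- exact: hreach_trans (rreach_front aL) (hreach_catl [:: a] (rreach_front b'L1)).
- by rewrite eq_sym.
- by rewrite kb' kb.
- by rewrite kc'' kc' !size_front.
Qed.

Lemma rreach_to_last L k a b c x : (5 <= size L)%N -> a \in L -> b \in L -> a != b ->
    cls a = k -> cls b = k -> c \in L -> (cls c).1 != k.1 -> cls x = k ->
  exists2 ys, rreach L (rcons ys x) & has_gen_pair ys.
Proof.
move=> sizeL aL bL ab ka kb cL kc kx.
have [b' [c' [L' [LL' ab' kb' c'L' [kc' sizeL']]]]] := two_to_front aL bL ab ka kb cL kc.
suff [ys L'ys gen_ys] : exists2 ys, rreach [:: a, b' & L'] (rcons ys x) & has_gen_pair ys.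
  by exists ys => //; apply: hreach_trans LL' L'ys.
have [/hasP[z zL' /eqP kz]|no_twin] := boolP (has (fun z => cls z == twin_class k) L').
  by apply: case_A ab' ka kb' kx zL' kz _; rewrite sizeL'; lia.
have kc'_opp : cls c' = opp_class k.
  apply: other_family_class; first by rewrite kc'.
  by apply: contraNneq no_twin => kz; apply/hasP; exists c'; rewrite ?kz.
pose L3 := front c' L'.
suff [ys L3ys gen_ys] : exists2 ys, rreach [:: a, b', c' & L3] (rcons ys x) & has_gen_pair ys.
  exists ys => //; apply: hreach_trans L3ys.
  by apply: (hreach_catl [:: a; b']); apply: rreach_front.
have [/hasP[z zL3 /eqP kz]|no_inv] := boolP (has (fun z => cls z == inv_class k) L3).
  exact: case_B ab' ka kb' kx kc'_opp zL3 kz.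
apply: case_C ab' ka kb' kx kc'_opp _ _; last by rewrite size_front // sizeL'; lia.
move=> z zL3; case: (cls z =P opp_class k) => [|z_opp]; [by right | left].
have not_inv : cls z != inv_class k.
  by apply: contraNneq no_inv => kz; apply/hasP; exists z; rewrite ?kz.
have not_twin : cls z != twin_class k.
  have /mapP[w wL' ->] := front_cls zL3.
  by apply: contraNneq no_twin => kw; apply/hasP; exists w; rewrite ?kw.
exact: same_family_class not_twin (introN eqP z_opp) not_inv.
Qed.

Lemma exists_map_rho (T : seq M) :
  {in T, forall r, exists j, r = rho j} -> exists L, T = map rho L.
Proof.
elim: T => [|r T IH] rT; first by exists [::].
have [j ->] := rT r (mem_head _ _).
have [L ->] : exists L, T = map rho L by apply: IH => s sT; apply: rT; rewrite inE sT orbT.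
by exists (j :: L).
Qed.

Lemma reflections_of_G5 T : refl_fact T -> generates T G5 -> exists L, T = map rho L.
Proof.
move=> reflT genT; apply: exists_map_rho => r rT.
by apply: G5_reflection (reflT r rT); apply/genT/generated_mem.
Qed.

Lemma class_member L k y :
  y \in map rho L -> class_elt k y -> exists2 j, j \in L & y = rho j /\ cls j = k.
Proof. by case/mapP=> j jL -> [r /rho_inj <- kr]; exists j. Qed.

Lemma generates_G5 ys :
  {in ys, forall r, G5 (rho r)} -> has_gen_pair ys -> generates (map rho ys) G5.
Proof.
move=> ysG5 /hasP[p pys /hasP[q qys pq]] A; split.
  apply: (generated_trans (gens := [:: t_mx; u_mx])) => [x tux|x /mapP[r rys ->]].
    exact/G5_unit/generated_mem.
  exact: ysG5.
apply: (gen_pair_G5 _ (map_f rho pys) (map_f rho qys) pq).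
by move=> x /mapP[r _ ->]; apply: rho_unit.
Qed.

Lemma rreach_G5 L L' :
  generates (map rho L) G5 -> rreach L L' -> {in L', forall r, G5 (rho r)}.
Proof.
move=> genL LL' r rL'.
apply: (hurwitz_reach_closed G5_conj (hurwitz_reach_map (fun a b => rho_conjr b a) LL')).
  by move=> y yL; apply/genL/generated_mem.
exact: map_f.
Qed.

Theorem proposition3p5 (T : seq 'M[algC]_2) (K : 'M[algC]_2 -> Prop) :
  refl_fact T -> (5 <= size T)%N -> generates T G5 ->
  (K = R1 \/ K = R1inv \/ K = R2 \/ K = R2inv) ->
  (exists a b, [/\ a != b, a \in T, b \in T, K a & K b]) ->
  forall x, K x ->
  exists T', hurwitz_equiv T T' /\
    exists rs : seq 'M[algC]_2, T' = rcons rs x /\ generates rs G5.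
Proof.
move=> reflT sizeT genT /reflection_class[k Kk] [a [b [ab aT bT /Kk ka /Kk kb]]] x.
move=> /Kk[jx -> kx]; have [L defT] := reflections_of_G5 reflT genT; subst T.
have [ja jaL [Ea ka']] := class_member aT ka.
have [jb jbL [Eb kb']] := class_member bT kb.
have jab : ja != jb by apply: contraNneq ab => E; rewrite Ea Eb E.
have /hasP[c cL kc] := generates_G5_other_family k.1 genT.
have sizeL : (5 <= size L)%N by rewrite -(size_map rho).
have [ys reach gen_ys] := rreach_to_last sizeL jaL jbL jab ka' kb' cL kc kx.
exists (map rho (rcons ys jx)); split.
  by left; apply: hurwitz_reach_map reach => a' b'; apply: rho_conjr.
exists (map rho ys); split; first by rewrite map_rcons.
apply: generates_G5 gen_ys => r rys; apply: (rreach_G5 genT reach).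
by rewrite mem_rcons inE rys orbT.
Qed.
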